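(* Let $(X_i,\mathbf{x}_m,X_f)$ be an instance of the three-point Dubins path problem. In any optimal path of type $C_1S_2C_3S_4C_5$, the inverses of (the lines containing) the straight segments $S_2$ and $S_4$ with respect to the circle centered at $\mathbf{x}_m$ with radius $R_{\min}$ are two circles of equal radius.
   Context: A Dubins vehicle moves forward in the plane with unit speed and minimum turning radius $R_{\min}$: $\dot x=\cos\alpha$, $\dot y=\sin\alpha$, $\dot\alpha=u$, $|u|\le 1/R_{\min}$. A configuration is $X=(\mathbf{x},\alpha)$ with heading $\alpha\in[0,2\pi)$. The three-point Dubins path problem: given initial and final configurations $X_i,X_f$ and a midpoint $\mathbf{x}_m$, with pairwise Euclidean distances among $\mathbf{x}_i,\mathbf{x}_m,\mathbf{x}_f$ at least $4R_{\min}$, find a heading at $\mathbf{x}_m$ minimizing the length of the shortest Dubins path from $X_i$ through $\mathbf{x}_m$ with that heading to $X_f$. A path of type $C_1S_2C_3S_4C_5$ consists of minimum-radius arcs $C_1$ (starting at $X_i$), $C_3$ (passing through $\mathbf{x}_m$), $C_5$ (ending at $X_f$), each a left or right turn, connected by straight segments $S_2$ and $S_4$. Circle inversion with respect to the circle of center $O$ and radius $r$ maps $P\neq O$ to the point on ray $OP$ at distance $r^2/|OP|$ from $O$; the inverse of a segment means the inverse of the full line containing it. *)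

From Stdlib Require Import Reals.
Open Scope R_scope.

(* Points of the plane and configurations (position, heading). *)
Definition pt := (R * R)%type.
Definition config := (pt * R)%type.

Definition pdist (p q : pt) : R :=
  sqrt ((fst p - fst q) ^ 2 + (snd p - snd q) ^ 2).

(* An admissible Dubins trajectory of duration (= length, unit speed) L:
   xdot = cos a, ydot = sin a, and the heading a is Lipschitz with
   constant 1/Rmin (equivalently a is absolutely continuous with
   |adot| = |u| <= 1/Rmin a.e.). *)
Definition dubins_traj (Rmin L : R) (x y a : R -> R) : Prop :=
  0 <= L /\
  (forall t, 0 <= t <= L ->
     derivable_pt_lim x t (cos (a t)) /\ derivable_pt_lim y t (sin (a t))) /\
  (forall s t, 0 <= s <= L -> 0 <= t <= L ->
     Rabs (a t - a s) <= Rabs (t - s) / Rmin).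

(* Headings are taken modulo 2*pi. *)
Definition same_heading (a b : R) : Prop := cos a = cos b /\ sin a = sin b.

Definition three_point_path (Rmin : R) (Xi : config) (xm : pt) (Xf : config)
    (L : R) (x y a : R -> R) : Prop :=
  dubins_traj Rmin L x y a /\
  (x 0, y 0) = fst Xi /\ same_heading (a 0) (snd Xi) /\
  (x L, y L) = fst Xf /\ same_heading (a L) (snd Xf) /\
  exists tm, 0 <= tm <= L /\ (x tm, y tm) = xm.

(* Optimal: minimal length among all feasible three-point paths
   (= minimizing over the heading at xm the shortest-path length). *)
Definition optimal_three_point_path (Rmin : R) (Xi : config) (xm : pt)
    (Xf : config) (L : R) (x y a : R -> R) : Prop :=
  three_point_path Rmin Xi xm Xf L x y a /\
  forall L' x' y' a', three_point_path Rmin Xi xm Xf L' x' y' a' -> L <= L'.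

Definition arc_on (Rmin : R) (a : R -> R) (t0 t1 : R) : Prop :=
  exists k, (k = 1 / Rmin \/ k = - (1 / Rmin)) /\
    forall t, t0 <= t <= t1 -> a t = a t0 + k * (t - t0).

Definition straight_on (a : R -> R) (t0 t1 : R) : Prop :=
  forall t, t0 <= t <= t1 -> a t = a t0.

Definition CSCSC_type (Rmin : R) (xm : pt) (L : R) (x y a : R -> R)
    (t1 t2 t3 t4 : R) : Prop :=
  0 < t1 < t2 /\ t2 < t3 /\ t3 < t4 /\ t4 < L /\
  arc_on Rmin a 0 t1 /\ straight_on a t1 t2 /\ arc_on Rmin a t2 t3 /\
  straight_on a t3 t4 /\ arc_on Rmin a t4 L /\
  exists tm, t2 <= tm <= t3 /\ (x tm, y tm) = xm.

Definition inversion (O : pt) (r : R) (P : pt) : pt :=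
  let k := r ^ 2 / (pdist O P) ^ 2 in
  (fst O + k * (fst P - fst O), snd O + k * (snd P - snd O)).

Definition line_through (P Q : pt) (X : pt) : Prop :=
  exists s, X = (fst P + s * (fst Q - fst P), snd P + s * (snd Q - snd P)).

Definition inverse_set (O : pt) (r : R) (S : pt -> Prop) (Y : pt) : Prop :=
  exists X, S X /\ X <> O /\ Y = inversion O r X.

(* The set T is the circle of center c and radius rho > 0, except possibly
   for the center of inversion O (which is never an image point). *)
Definition is_circle_off (O : pt) (T : pt -> Prop) (c : pt) (rho : R) : Prop :=
  0 < rho /\ forall Y, Y <> O -> (T Y <-> pdist Y c = rho).

From Stdlib Require Import Reals Lra.
From Coquelicot Require Import Coquelicot.
Open Scope R_scope.

(* The inverse of a line lying at distance [h > 0] from the center [xm] of the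
   inversion is a circle of radius [Rmin^2 / (2 h)], so it suffices to show that
   [xm] is equally far from the lines of [S2] and [S4].  If [C3] turns through
   the angles [u] before [xm] and [w] after it, these distances are
   [Rmin (1 - cos u)] and [Rmin (1 - cos w)].  Rotating [C3] about [xm] by a
   small angle [d], while keeping the circles of [C1] and [C5] and re-fitting the
   tangent segments, changes the length of the path by
   [+- Rmin (cos w - cos u) d + O(d^2)]; optimality therefore forces
   [cos u = cos w].  Optimality also excludes a full loop on [C3], so
   [cos u <> 1] and the two lines do not pass through [xm]. *)

(** * Elementary estimates *)

Lemma mvt_abs_le (f f' : R -> R) (a b M : R) :
  (forall c, Rmin a b <= c <= Rmax a b -> derivable_pt_lim f c (f' c)) ->
  (forall c, Rmin a b <= c <= Rmax a b -> Rabs (f' c) <= M) ->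
  Rabs (f b - f a) <= M * Rabs (b - a).
Proof.
  intros Hd Hb.
  destruct (Rtotal_order a b) as [Hab|[<-|Hab]].
  - destruct (MVT_cor2 f f' a b Hab) as [c [-> Hc]].
    { intros c Hc; apply Hd; rewrite Rmin_left, Rmax_right; lra. }
    rewrite Rabs_mult. apply Rmult_le_compat_r; [apply Rabs_pos|].
    apply Hb; rewrite Rmin_left, Rmax_right; lra.
  - rewrite !Rminus_diag, Rabs_R0; lra.
  - destruct (MVT_cor2 f f' b a Hab) as [c [Hc1 Hc]].
    { intros c Hc; apply Hd; rewrite Rmin_right, Rmax_left; lra. }
    rewrite <- (Rabs_Ropp (f b - f a)), <- (Rabs_Ropp (b - a)), !Ropp_minus_distr.
    rewrite Hc1, Rabs_mult. apply Rmult_le_compat_r; [apply Rabs_pos|].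
    apply Hb; rewrite Rmin_right, Rmax_left; lra.
Qed.

Lemma sin_lipschitz (a b : R) : Rabs (sin b - sin a) <= Rabs (b - a).
Proof.
  rewrite <- (Rmult_1_l (Rabs (b - a))).
  apply (mvt_abs_le sin cos); intros.
  - apply derivable_pt_lim_sin.
  - apply Rabs_le, COS_bound.
Qed.

Lemma cos_lipschitz (a b : R) : Rabs (cos b - cos a) <= Rabs (b - a).
Proof.
  rewrite <- (Rmult_1_l (Rabs (b - a))).
  apply (mvt_abs_le cos (fun t => - sin t)); intros.
  - apply derivable_pt_lim_cos.
  - rewrite Rabs_Ropp. apply Rabs_le, SIN_bound.
Qed.

Lemma one_minus_cos_bounds (d : R) : 0 <= 1 - cos d <= d ^ 2 / 2.
Proof.
  replace (cos d) with (cos (2 * (d / 2))) by (f_equal; field).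
  rewrite cos_2a_sin.
  pose proof (sin_lipschitz 0 (d / 2)) as H. rewrite sin_0, !Rminus_0_r in H.
  apply Rsqr_le_abs_1 in H. unfold Rsqr in H. nra.
Qed.

Lemma sin_sub_id_le (d : R) : Rabs (sin d - d) <= Rabs d ^ 3 / 2.
Proof.
  pose proof (mvt_abs_le (fun t => sin t - t) (fun t => cos t - 1) 0 d (d ^ 2 / 2)) as H.
  cbv beta in H. rewrite sin_0, !Rminus_0_r in H.
  replace (Rabs d ^ 3 / 2) with (d ^ 2 / 2 * Rabs d) by (rewrite <- pow2_abs; field).
  apply H; intros c Hc.
  - apply derivable_pt_lim_minus; [apply derivable_pt_lim_sin|apply derivable_pt_lim_id].
  - pose proof (one_minus_cos_bounds c).
    assert (c ^ 2 <= d ^ 2) by (unfold Rmin, Rmax in Hc; destruct (Rle_dec 0 d); nra).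
    rewrite Rabs_left1; lra.
Qed.

Lemma Rabs_atan_le (z : R) : Rabs (atan z) <= Rabs z.
Proof.
  pose proof (mvt_abs_le atan (fun t => / (1 + t ^ 2)) 0 z 1) as H.
  rewrite atan_0, !Rminus_0_r, Rmult_1_l in H.
  apply H; intros c _.
  - apply derivable_pt_lim_atan.
  - assert (0 <= c ^ 2) by nra.
    rewrite Rabs_right by (apply Rle_ge, Rlt_le, Rinv_0_lt_compat; lra).
    rewrite <- Rinv_1. apply Rinv_le_contravar; lra.
Qed.

Lemma sin_add_linear_approx (x d : R) :
  Rabs d <= 1 -> Rabs (sin (x + d) - sin x - d * cos x) <= d ^ 2.
Proof.
  intros Hd. rewrite sin_plus.
  replace (sin x * cos d + cos x * sin d - sin x - d * cos x)
    with (- (sin x * (1 - cos d)) + cos x * (sin d - d)) by ring.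
  eapply Rle_trans; [apply Rabs_triang|]. rewrite Rabs_Ropp, !Rabs_mult.
  assert (Rabs (sin x) <= 1) by apply Rabs_le, SIN_bound.
  assert (Rabs (cos x) <= 1) by apply Rabs_le, COS_bound.
  pose proof (one_minus_cos_bounds d). pose proof (sin_sub_id_le d).
  rewrite (Rabs_right (1 - cos d)) by lra.
  pose proof (Rabs_pos (sin x)). pose proof (Rabs_pos (cos x)).
  pose proof (Rabs_pos (sin d - d)). pose proof (Rabs_pos d).
  assert (Hd3 : Rabs d ^ 3 <= Rabs d ^ 2) by (simpl; nra).
  rewrite pow2_abs in Hd3.
  assert (Rabs (sin x) * (1 - cos d) <= 1 * (d ^ 2 / 2)) by (apply Rmult_le_compat; lra).
  assert (Rabs (cos x) * Rabs (sin d - d) <= 1 * (d ^ 2 / 2)) by (apply Rmult_le_compat; lra).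
  lra.
Qed.

Lemma Rabs_le_2_Rabs_sin (D : R) : Rabs D <= 1 -> Rabs D <= 2 * Rabs (sin D).
Proof.
  intros HD. pose proof (sin_sub_id_le D) as Hs. pose proof (Rabs_pos D).
  assert (Rabs D ^ 3 <= Rabs D) by (simpl; nra).
  pose proof (Rabs_triang_inv D (D - sin D)) as Htri.
  replace (D - (D - sin D)) with (sin D) in Htri by ring.
  rewrite Rabs_minus_sym in Hs. lra.
Qed.

Lemma cos_eq_1_0_2PI (u : R) : 0 <= u < 2 * PI -> cos u = 1 -> u = 0.
Proof.
  intros Hu Hc. destruct (Req_dec u 0) as [|Hu0]; [assumption|exfalso].
  replace u with (2 * (u / 2)) in Hc by field. rewrite cos_2a_sin in Hc.
  assert (0 < sin (u / 2)) by (apply sin_gt_0; lra). nra.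
Qed.

Lemma sin_cos_sub_2PI_mult (n z : R) : (n = -1 \/ n = 0 \/ n = 1) ->
  sin (z - 2 * PI * n) = sin z /\ cos (z - 2 * PI * n) = cos z.
Proof.
  pose proof (sin_period (z - 2 * PI) 1). pose proof (cos_period (z - 2 * PI) 1).
  pose proof (sin_period z 1). pose proof (cos_period z 1). simpl INR in *.
  replace (z - 2 * PI + 2 * 1 * PI) with z in * by ring.
  intros [-> | [-> | ->]].
  - replace (z - 2 * PI * -1) with (z + 2 * 1 * PI) by ring. auto.
  - rewrite Rmult_0_r, Rminus_0_r. auto.
  - rewrite Rmult_1_r. auto.
Qed.

(** * Dubins paths built from arcs and segments *)

Definition dubins_path (Rm L : R) (p0 : pt) (a0 : R) (p1 : pt) (a1 : R)
    (x y a : R -> R) : Prop :=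
  dubins_traj Rm L x y a /\ (x 0, y 0) = p0 /\ a 0 = a0 /\
  (x L, y L) = p1 /\ a L = a1.

Definition visits (L : R) (x y : R -> R) (q : pt) : Prop :=
  exists t, 0 <= t <= L /\ (x t, y t) = q.

Lemma dubins_path_visits_end (Rm L : R) (p0 p1 : pt) (a0 a1 : R) (x y a : R -> R) :
  dubins_path Rm L p0 a0 p1 a1 x y a -> visits L x y p1.
Proof. intros [[HL _] [_ [_ [He _]]]]. exists L. split; [lra|exact He]. Qed.

Definition glue (T : R) (f g : R -> R) (t : R) : R :=
  if Rle_dec t T then f t else g (t - T).

Lemma glue_left (T : R) (f g : R -> R) (t : R) : t <= T -> glue T f g t = f t.
Proof. intros Ht. unfold glue. destruct (Rle_dec t T); [reflexivity|lra]. Qed.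

Lemma glue_right (T : R) (f g : R -> R) (t : R) :
  f T = g 0 -> T <= t -> glue T f g t = g (t - T).
Proof.
  intros Hfg Ht. unfold glue. destruct (Rle_dec t T); [|reflexivity].
  replace t with T by lra. rewrite Rminus_diag. exact Hfg.
Qed.

Lemma derivable_pt_lim_near (f g : R -> R) (t l eta : R) :
  0 < eta -> (forall s, Rabs (s - t) < eta -> f s = g s) ->
  derivable_pt_lim g t l -> derivable_pt_lim f t l.
Proof.
  intros He Hfg Hg eps Heps.
  destruct (Hg eps Heps) as [d Hd].
  assert (Hm : 0 < Rmin d eta) by (apply Rmin_pos; [apply cond_pos|lra]).
  exists (mkposreal _ Hm). intros h Hh0 Hh. simpl in Hh.
  rewrite (Hfg (t + h)), (Hfg t).
  - apply Hd; [exact Hh0|]. eapply Rlt_le_trans; [exact Hh|apply Rmin_l].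
  - rewrite Rminus_diag, Rabs_R0; lra.
  - replace (t + h - t) with h by ring. eapply Rlt_le_trans; [exact Hh|apply Rmin_r].
Qed.

Lemma derivable_pt_lim_piecewise (f g : R -> R) (T l : R) :
  f T = g T -> derivable_pt_lim f T l -> derivable_pt_lim g T l ->
  derivable_pt_lim (fun t => if Rle_dec t T then f t else g t) T l.
Proof.
  intros HT Hf Hg eps Heps.
  destruct (Hf eps Heps) as [d1 Hd1]. destruct (Hg eps Heps) as [d2 Hd2].
  assert (Hm : 0 < Rmin d1 d2) by (apply Rmin_pos; apply cond_pos).
  exists (mkposreal _ Hm). intros h Hh0 Hh. simpl in Hh.
  destruct (Rle_dec T T) as [_|]; [|lra].
  destruct (Rle_dec (T + h) T).
  - apply Hd1; [exact Hh0|]. eapply Rlt_le_trans; [exact Hh|apply Rmin_l].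
  - rewrite HT. apply Hd2; [exact Hh0|]. eapply Rlt_le_trans; [exact Hh|apply Rmin_r].
Qed.

Lemma derivable_pt_lim_shift (g : R -> R) (t c l : R) :
  derivable_pt_lim g (t - c) l -> derivable_pt_lim (fun s => g (s - c)) t l.
Proof.
  intros Hg eps Heps. destruct (Hg eps Heps) as [d Hd].
  exists d. intros h Hh0 Hh.
  replace (t + h - c) with (t - c + h) by ring. apply Hd; assumption.
Qed.

Lemma glue_derivable (T : R) (f g : R -> R) (t l : R) :
  f T = g 0 ->
  (t <= T -> derivable_pt_lim f t l) ->
  (T <= t -> derivable_pt_lim g (t - T) l) ->
  derivable_pt_lim (glue T f g) t l.
Proof.
  intros Hfg Hf Hg.
  destruct (Rtotal_order t T) as [Hlt|[<-|Hgt]].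
  - apply (derivable_pt_lim_near _ f t l (T - t)); [lra| |apply Hf; lra].
    intros s Hs. apply glue_left. apply Rabs_def2 in Hs. lra.
  - apply derivable_pt_lim_piecewise.
    + rewrite Rminus_diag. exact Hfg.
    + apply Hf; lra.
    + apply derivable_pt_lim_shift, Hg; lra.
  - apply (derivable_pt_lim_near _ (fun s => g (s - T)) t l (t - T)); [lra| |].
    + intros s Hs. unfold glue. destruct (Rle_dec s T); [|reflexivity].
      apply Rabs_def2 in Hs. lra.
    + apply derivable_pt_lim_shift, Hg; lra.
Qed.

Lemma glue_lipschitz (Rm L1 L2 : R) (f g : R -> R) :
  0 < Rm -> f L1 = g 0 ->
  (forall s t, 0 <= s <= L1 -> 0 <= t <= L1 -> Rabs (f t - f s) <= Rabs (t - s) / Rm) ->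
  (forall s t, 0 <= s <= L2 -> 0 <= t <= L2 -> Rabs (g t - g s) <= Rabs (t - s) / Rm) ->
  forall s t, 0 <= s <= L1 + L2 -> 0 <= t <= L1 + L2 ->
    Rabs (glue L1 f g t - glue L1 f g s) <= Rabs (t - s) / Rm.
Proof.
  intros HR Hfg Hf Hg.
  assert (Hord : forall s t, 0 <= s <= t -> t <= L1 + L2 ->
            Rabs (glue L1 f g t - glue L1 f g s) <= (t - s) / Rm).
  { intros s t Hst Ht. unfold glue.
    destruct (Rle_dec t L1), (Rle_dec s L1); try lra.
    - rewrite <- (Rabs_right (t - s)) by lra. apply Hf; lra.
    - replace (g (t - L1) - f s) with ((g (t - L1) - g 0) + (f L1 - f s)) by (rewrite Hfg; ring).
      eapply Rle_trans; [apply Rabs_triang|].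
      replace ((t - s) / Rm) with ((t - L1 - 0) / Rm + (L1 - s) / Rm) by (field; lra).
      rewrite <- (Rabs_right (t - L1 - 0)), <- (Rabs_right (L1 - s)) by lra.
      apply Rplus_le_compat; [apply Hg|apply Hf]; lra.
    - replace (t - s) with ((t - L1) - (s - L1)) by ring.
      rewrite <- (Rabs_right ((t - L1) - (s - L1))) by lra. apply Hg; lra. }
  intros s t Hs Ht. destruct (Rle_dec s t).
  - rewrite (Rabs_right (t - s)) by lra. apply Hord; lra.
  - rewrite Rabs_minus_sym, (Rabs_minus_sym t), (Rabs_right (s - t)) by lra.
    apply Hord; lra.
Qed.

Lemma dubins_traj_glue (Rm L1 L2 : R) (x1 y1 a1 x2 y2 a2 : R -> R) :
  0 < Rm -> dubins_traj Rm L1 x1 y1 a1 -> dubins_traj Rm L2 x2 y2 a2 ->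
  x1 L1 = x2 0 -> y1 L1 = y2 0 -> a1 L1 = a2 0 ->
  dubins_traj Rm (L1 + L2) (glue L1 x1 x2) (glue L1 y1 y2) (glue L1 a1 a2).
Proof.
  intros HR [HL1 [Hd1 Hl1]] [HL2 [Hd2 Hl2]] Hx Hy Ha.
  split; [lra|split; [|apply glue_lipschitz; assumption]].
  intros t Ht.
  split; apply glue_derivable; try assumption; intros Hle.
  - rewrite glue_left by exact Hle. apply Hd1; lra.
  - rewrite glue_right by assumption. apply Hd2; lra.
  - rewrite glue_left by exact Hle. apply Hd1; lra.
  - rewrite glue_right by assumption. apply Hd2; lra.
Qed.

Lemma dubins_path_concat (Rm L1 L2 : R) (p0 p1 p2 : pt) (a0 b1 b2 : R)
    (x1 y1 A1 x2 y2 A2 : R -> R) :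
  0 < Rm ->
  dubins_path Rm L1 p0 a0 p1 b1 x1 y1 A1 -> dubins_path Rm L2 p1 b1 p2 b2 x2 y2 A2 ->
  exists x y a, dubins_path Rm (L1 + L2) p0 a0 p2 b2 x y a /\
    (forall q, visits L1 x1 y1 q -> visits (L1 + L2) x y q) /\
    (forall q, visits L2 x2 y2 q -> visits (L1 + L2) x y q).
Proof.
  intros HR [G1 [S1 [H01 [E1 HL1]]]] [G2 [S2 [H02 [E2 HL2]]]].
  pose proof (proj1 G1) as HL1pos. pose proof (proj1 G2) as HL2pos.
  rewrite <- E1 in S2. injection S2 as Hx Hy.
  assert (Ha : A1 L1 = A2 0) by congruence.
  assert (Hright : forall f g : R -> R, f L1 = g 0 -> forall t, 0 <= t ->
            glue L1 f g (L1 + t) = g t).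
  { intros f g Hfg t Ht. rewrite glue_right by (assumption || lra). f_equal; ring. }
  exists (glue L1 x1 x2), (glue L1 y1 y2), (glue L1 A1 A2).
  split; [split; [|split; [|split; [|split]]]|split].
  - apply dubins_traj_glue; auto.
  - rewrite !glue_left by lra. exact S1.
  - rewrite glue_left by lra. exact H01.
  - rewrite !Hright by auto. exact E2.
  - rewrite Hright by auto. exact HL2.
  - intros q [t [Ht Hq]]. exists t. split; [lra|]. rewrite !glue_left by lra. exact Hq.
  - intros q [t [Ht Hq]]. exists (L1 + t). split; [lra|]. rewrite !Hright by (auto; lra). exact Hq.
Qed.

(* [turn_point c s r th] is the point of the circle of center [c] and radius [r]
   at which a vehicle turning left ([s = 1]) or right ([s = -1]) along it has
   heading [th]; [turn_center] recovers [c] from that point. *)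
Definition turn_point (c : pt) (s r th : R) : pt :=
  (fst c + s * r * sin th, snd c - s * r * cos th).

Definition turn_center (p : pt) (s r th : R) : pt :=
  (fst p - s * r * sin th, snd p + s * r * cos th).

Definition advance (p : pt) (l th : R) : pt :=
  (fst p + l * cos th, snd p + l * sin th).

Definition tangent_segment (c1 : pt) (s1 : R) (c2 : pt) (s2 r l ps : R) : Prop :=
  advance (turn_point c1 s1 r ps) l ps = turn_point c2 s2 r ps.

Lemma turn_point_center (p : pt) (s r th : R) :
  turn_point (turn_center p s r th) s r th = p.
Proof. destruct p as [p1 p2]. unfold turn_point, turn_center. simpl. f_equal; ring. Qed.

Lemma tangent_segment_iff (c1 c2 : pt) (s1 s2 r l ps : R) :
  tangent_segment c1 s1 c2 s2 r l ps <->
  fst c2 - fst c1 = l * cos ps - (s2 - s1) * r * sin ps /\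
  snd c2 - snd c1 = l * sin ps + (s2 - s1) * r * cos ps.
Proof.
  unfold tangent_segment, advance, turn_point. simpl. split.
  - intros H. injection H as H1 H2. split; lra.
  - intros [H1 H2]. f_equal; lra.
Qed.

Lemma Rabs_sign (s : R) : (s = 1 \/ s = -1) -> Rabs s = 1.
Proof. intros [-> | ->]; unfold Rabs; destruct Rcase_abs; lra. Qed.

Lemma arc_dubins_path (Rm s l : R) (c : pt) (al be : R) :
  0 < Rm -> (s = 1 \/ s = -1) -> 0 <= l -> al + s * l / Rm = be ->
  exists x y a, dubins_path Rm l (turn_point c s Rm al) al (turn_point c s Rm be) be x y a.
Proof.
  intros HR Hs Hl <-.
  assert (Hs2 : s * s = 1) by (destruct Hs as [-> | ->]; ring).
  exists (fun t => fst c + s * Rm * sin (al + s * t / Rm)),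
         (fun t => snd c - s * Rm * cos (al + s * t / Rm)), (fun t => al + s * t / Rm).
  split; [split; [lra|split]|].
  - intros t _. split; apply is_derive_Reals; auto_derive; auto; unfold Rdiv.
    + transitivity (s * s * (Rm * / Rm) * cos (al + s * t * / Rm)); [ring|].
      rewrite Hs2, Rinv_r; lra.
    + transitivity (s * s * (Rm * / Rm) * sin (al + s * t * / Rm)); [ring|].
      rewrite Hs2, Rinv_r; lra.
  - intros u t _ _.
    replace (al + s * t / Rm - (al + s * u / Rm)) with (s * ((t - u) / Rm)) by (field; lra).
    rewrite Rabs_mult, Rabs_sign, Rabs_div, (Rabs_right Rm); lra.
  - unfold turn_point. replace (s * 0 / Rm) with 0 by (field; lra). rewrite Rplus_0_r.
    repeat split; f_equal; ring.
Qed.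

Lemma segment_dubins_path (Rm l : R) (p : pt) (al : R) :
  0 < Rm -> 0 <= l -> exists x y a, dubins_path Rm l p al (advance p l al) al x y a.
Proof.
  intros HR Hl.
  exists (fun t => fst p + t * cos al), (fun t => snd p + t * sin al), (fun _ => al).
  split; [split; [lra|split]|].
  - intros t _. split; apply is_derive_Reals; auto_derive; auto; ring.
  - intros u t _ _. rewrite Rminus_diag, Rabs_R0.
    apply Rmult_le_pos; [apply Rabs_pos|left; apply Rinv_0_lt_compat; lra].
  - destruct p as [p1 p2]. repeat split; simpl; f_equal; ring.
Qed.

Lemma CSCSC_dubins_path (Rm s1 s3 s5 : R) (c1 c3 c5 : pt)
    (al0 ps2 th ps4 ae A1 l2 B1 B2 l4 A5 : R) :
  0 < Rm -> (s1 = 1 \/ s1 = -1) -> (s3 = 1 \/ s3 = -1) -> (s5 = 1 \/ s5 = -1) ->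
  0 <= A1 -> 0 <= l2 -> 0 <= B1 -> 0 <= B2 -> 0 <= l4 -> 0 <= A5 ->
  al0 + s1 * A1 / Rm = ps2 -> ps2 + s3 * B1 / Rm = th ->
  th + s3 * B2 / Rm = ps4 -> ps4 + s5 * A5 / Rm = ae ->
  tangent_segment c1 s1 c3 s3 Rm l2 ps2 -> tangent_segment c3 s3 c5 s5 Rm l4 ps4 ->
  exists x y a,
    dubins_path Rm (A1 + (l2 + (B1 + (B2 + (l4 + A5)))))
      (turn_point c1 s1 Rm al0) al0 (turn_point c5 s5 Rm ae) ae x y a /\
    visits (A1 + (l2 + (B1 + (B2 + (l4 + A5))))) x y (turn_point c3 s3 Rm th).
Proof.
  intros HR Hs1 Hs3 Hs5 HA1 Hl2 HB1 HB2 Hl4 HA5 E1 E3 E4 E5 T2 T4.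
  destruct (arc_dubins_path Rm s1 A1 c1 al0 ps2) as [x1 [y1 [a1 G1]]]; auto.
  destruct (segment_dubins_path Rm l2 (turn_point c1 s1 Rm ps2) ps2) as [x2 [y2 [a2 G2]]]; auto.
  destruct (arc_dubins_path Rm s3 B1 c3 ps2 th) as [x3 [y3 [a3 G3]]]; auto.
  destruct (arc_dubins_path Rm s3 B2 c3 th ps4) as [x4 [y4 [a4 G4]]]; auto.
  destruct (segment_dubins_path Rm l4 (turn_point c3 s3 Rm ps4) ps4) as [x5 [y5 [a5 G5]]]; auto.
  destruct (arc_dubins_path Rm s5 A5 c5 ps4 ae) as [x6 [y6 [a6 G6]]]; auto.
  unfold tangent_segment in T2, T4. rewrite T2 in G2. rewrite T4 in G5.
  destruct (dubins_path_concat _ _ _ _ _ _ _ _ _ _ _ _ _ _ _ HR G5 G6) as [x56 [y56 [a56 [G56 _]]]].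
  destruct (dubins_path_concat _ _ _ _ _ _ _ _ _ _ _ _ _ _ _ HR G4 G56) as [x46 [y46 [a46 [G46 _]]]].
  destruct (dubins_path_concat _ _ _ _ _ _ _ _ _ _ _ _ _ _ _ HR G3 G46)
    as [x36 [y36 [a36 [G36 [V36 _]]]]].
  destruct (dubins_path_concat _ _ _ _ _ _ _ _ _ _ _ _ _ _ _ HR G2 G36)
    as [x26 [y26 [a26 [G26 [_ V26]]]]].
  destruct (dubins_path_concat _ _ _ _ _ _ _ _ _ _ _ _ _ _ _ HR G1 G26)
    as [x16 [y16 [a16 [G16 [_ V16]]]]].
  exists x16, y16, a16. split; [exact G16|].
  apply V16, V26, V36. eapply dubins_path_visits_end; eauto.
Qed.

Lemma derivative_eq_const (f g h : R -> R) (t0 t1 : R) : t0 <= t1 ->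
  (forall c, t0 <= c <= t1 -> derivable_pt_lim f c (h c)) ->
  (forall c, t0 <= c <= t1 -> derivable_pt_lim g c (h c)) ->
  f t1 - g t1 = f t0 - g t0.
Proof.
  intros H01 Hf Hg.
  pose proof (mvt_abs_le (fun t => f t - g t) (fun _ => 0) t0 t1 0) as H.
  rewrite Rmin_left, Rmax_right, Rmult_0_l in H by lra.
  apply Rabs_le_between in H; [lra| |].
  - intros c Hc. replace 0 with (h c - h c) by ring. apply derivable_pt_lim_minus; auto.
  - intros c _. rewrite Rabs_R0. lra.
Qed.

Lemma arc_turn_center_const (Rm L s t0 t1 : R) (x y a : R -> R) :
  0 < Rm -> (s = 1 \/ s = -1) -> dubins_traj Rm L x y a ->
  0 <= t0 -> t0 <= t1 -> t1 <= L ->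
  (forall t, t0 <= t <= t1 -> a t = a t0 + s / Rm * (t - t0)) ->
  turn_center (x t1, y t1) s Rm (a t1) = turn_center (x t0, y t0) s Rm (a t0).
Proof.
  intros HR Hs [_ [Hd _]] H0 H01 H1 Ha.
  assert (Hs2 : s * s = 1) by (destruct Hs as [-> | ->]; ring).
  set (al := fun t => a t0 + s / Rm * (t - t0)).
  assert (Hal : forall t, t0 <= t <= t1 -> al t = a t) by (intros; symmetry; apply Ha; auto).
  assert (Hx : x t1 - s * Rm * sin (al t1) = x t0 - s * Rm * sin (al t0)).
  { apply (derivative_eq_const x (fun t => s * Rm * sin (al t)) (fun t => cos (a t)));
      [lra|intros c Hc; apply Hd; lra|].
    intros c Hc. rewrite <- (Hal c Hc). apply is_derive_Reals. unfold al. auto_derive; auto.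
    transitivity (s * s * cos (a t0 + s / Rm * (c - t0))); [unfold Rminus; field; lra|].
    rewrite Hs2; ring. }
  assert (Hy : y t1 - - (s * Rm * cos (al t1)) = y t0 - - (s * Rm * cos (al t0))).
  { apply (derivative_eq_const y (fun t => - (s * Rm * cos (al t))) (fun t => sin (a t)));
      [lra|intros c Hc; apply Hd; lra|].
    intros c Hc. rewrite <- (Hal c Hc). apply is_derive_Reals. unfold al. auto_derive; auto.
    transitivity (s * s * sin (a t0 + s / Rm * (c - t0))); [unfold Rminus; field; lra|].
    rewrite Hs2; ring. }
  rewrite !Hal in Hx, Hy by lra. unfold turn_center. simpl. f_equal; lra.
Qed.

Lemma segment_advance (Rm L t0 t1 : R) (x y a : R -> R) :
  dubins_traj Rm L x y a -> 0 <= t0 -> t0 <= t1 -> t1 <= L ->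
  (forall t, t0 <= t <= t1 -> a t = a t0) ->
  (x t1, y t1) = advance (x t0, y t0) (t1 - t0) (a t0).
Proof.
  intros [_ [Hd _]] H0 H01 H1 Ha.
  assert (Hx : x t1 - t1 * cos (a t0) = x t0 - t0 * cos (a t0)).
  { apply (derivative_eq_const x (fun t => t * cos (a t0)) (fun _ => cos (a t0))); [lra| |].
    - intros c Hc. rewrite <- (Ha c Hc). apply Hd; lra.
    - intros c _. apply is_derive_Reals. auto_derive; auto; ring. }
  assert (Hy : y t1 - t1 * sin (a t0) = y t0 - t0 * sin (a t0)).
  { apply (derivative_eq_const y (fun t => t * sin (a t0)) (fun _ => sin (a t0))); [lra| |].
    - intros c Hc. rewrite <- (Ha c Hc). apply Hd; lra.
    - intros c _. apply is_derive_Reals. auto_derive; auto; ring. }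
  unfold advance. simpl. f_equal; lra.
Qed.

(** * Tangent segments between perturbed circles *)

Lemma cos_sin_atan_ratio (N D S : R) : 0 < D -> 0 < S -> D ^ 2 + N ^ 2 = S ^ 2 ->
  cos (atan (N / D)) = D / S /\ sin (atan (N / D)) = N / S.
Proof.
  intros HD HS HE.
  assert (Hq : sqrt (1 + (N / D)²) = S / D).
  { replace (1 + (N / D)²) with ((S / D) ^ 2).
    - apply sqrt_pow2. apply Rlt_le, Rdiv_lt_0_compat; lra.
    - unfold Rsqr. field_simplify; [|lra|lra]. rewrite <- HE. field. lra. }
  rewrite cos_atan, sin_atan, Hq. split; field; lra.
Qed.

Lemma polar_solve_exact (X Y k m : R) :
  0 < m -> m ^ 2 = X ^ 2 + Y ^ 2 - k ^ 2 -> 0 < m * X + k * Y ->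
  exists D, Rabs D <= Rabs ((m * Y - k * X) / (m * X + k * Y)) /\
    X = m * cos D - k * sin D /\ Y = m * sin D + k * cos D.
Proof.
  intros Hm Hm2 HDn.
  exists (atan ((m * Y - k * X) / (m * X + k * Y))). split; [apply Rabs_atan_le|].
  assert (HS : 0 < X ^ 2 + Y ^ 2) by nra.
  destruct (cos_sin_atan_ratio (m * Y - k * X) (m * X + k * Y) (X ^ 2 + Y ^ 2))
    as [Hc Hs]; [lra|lra|nra|].
  assert (Hmk : m ^ 2 + k ^ 2 = X ^ 2 + Y ^ 2) by lra.
  rewrite Hc, Hs. split.
  - replace (m * ((m * X + k * Y) / (X ^ 2 + Y ^ 2)) - k * ((m * Y - k * X) / (X ^ 2 + Y ^ 2)))
      with (X * ((m ^ 2 + k ^ 2) / (X ^ 2 + Y ^ 2))) by (field; lra).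
    rewrite Hmk. field. lra.
  - replace (m * ((m * Y - k * X) / (X ^ 2 + Y ^ 2)) + k * ((m * X + k * Y) / (X ^ 2 + Y ^ 2)))
      with (Y * ((m ^ 2 + k ^ 2) / (X ^ 2 + Y ^ 2))) by (field; lra).
    rewrite Hmk. field. lra.
Qed.

Lemma polar_norm_estimate (l0 k X Y e : R) :
  0 < l0 -> 0 <= e -> 16 * (l0 + Rabs k) * e <= l0 ^ 2 ->
  Rabs (X - l0) <= e -> Rabs (Y - k) <= e ->
  Rabs (X ^ 2 + Y ^ 2 - k ^ 2 - l0 ^ 2) <= 3 * (l0 + Rabs k) * e.
Proof.
  intros Hl He Hsmall HX HY.
  pose proof (Rabs_pos k) as Hak.
  assert (He16 : e <= l0 / 16).
  { apply Rmult_le_reg_l with (16 * l0); [lra|]. field_simplify.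
    pose proof (Rmult_le_pos _ _ Hak He). lra. }
  pose proof (pow_maj_Rabs _ _ 2 HX). pose proof (pow_maj_Rabs _ _ 2 HY).
  assert (Hky : Rabs (k * (Y - k)) <= Rabs k * e)
    by (rewrite Rabs_mult; apply Rmult_le_compat_l; assumption).
  apply Rabs_le_between in HX, HY, Hky. apply Rabs_le_between.
  replace (X ^ 2 + Y ^ 2 - k ^ 2 - l0 ^ 2)
    with (2 * l0 * (X - l0) + (X - l0) ^ 2 + 2 * (k * (Y - k)) + (Y - k) ^ 2) by ring.
  split; nra.
Qed.

Lemma polar_estimates (l0 k X Y e m : R) :
  0 < l0 -> 0 <= e -> 16 * (l0 + Rabs k) * e <= l0 ^ 2 ->
  Rabs (X - l0) <= e -> Rabs (Y - k) <= e -> 0 <= m -> m ^ 2 = X ^ 2 + Y ^ 2 - k ^ 2 ->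
  l0 / 2 <= m <= 2 * l0 /\ l0 ^ 2 / 4 <= m * X + k * Y /\
  l0 * Rabs (m * Y - k * X) <= (3 * Rabs k * (l0 + Rabs k) + (2 * l0 + Rabs k) * l0) * e.
Proof.
  intros Hl He Hsmall HX HY Hm0 Hm2.
  pose proof (Rabs_pos k) as Hak.
  pose proof (polar_norm_estimate l0 k X Y e Hl He Hsmall HX HY) as HQ.
  rewrite <- Hm2 in HQ. apply Rabs_le_between in HQ.
  assert (Hm : l0 / 2 <= m <= 2 * l0) by (split; nra).
  assert (Hml : l0 * Rabs (m - l0) <= 3 * (l0 + Rabs k) * e).
  { apply Rle_trans with ((m + l0) * Rabs (m - l0)); [apply Rmult_le_compat_r; [apply Rabs_pos|lra]|].
    rewrite <- (Rabs_right (m + l0)) at 1 by lra. rewrite <- Rabs_mult.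
    replace ((m + l0) * (m - l0)) with (m ^ 2 - l0 ^ 2) by ring.
    apply Rabs_le_between. lra. }
  assert (HmX : Rabs (m * (X - l0)) <= 2 * l0 * e)
    by (rewrite Rabs_mult, Rabs_right by lra; apply Rmult_le_compat; lra || apply Rabs_pos).
  assert (HmY : Rabs (m * (Y - k)) <= 2 * l0 * e)
    by (rewrite Rabs_mult, Rabs_right by lra; apply Rmult_le_compat; lra || apply Rabs_pos).
  assert (HkX : Rabs (k * (X - l0)) <= Rabs k * e)
    by (rewrite Rabs_mult; apply Rmult_le_compat_l; assumption).
  assert (HkY : Rabs (k * (Y - k)) <= Rabs k * e)
    by (rewrite Rabs_mult; apply Rmult_le_compat_l; assumption).
  split; [exact Hm|split].
  - replace (m * X + k * Y) with (m * l0 + m * (X - l0) + k ^ 2 + k * (Y - k)) by ring.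
    apply Rabs_le_between in HmX, HkY. nra.
  - replace (m * Y - k * X) with (k * (m - l0) + m * (Y - k) - k * (X - l0)) by ring.
    assert (Hkm : Rabs (k * (m - l0)) * l0 <= Rabs k * (3 * (l0 + Rabs k) * e)).
    { rewrite Rabs_mult, Rmult_assoc, (Rmult_comm _ l0). apply Rmult_le_compat_l; assumption. }
    replace (k * (m - l0) + m * (Y - k) - k * (X - l0))
      with (k * (m - l0) + m * (Y - k) + - (k * (X - l0))) by ring.
    pose proof (Rabs_triang (k * (m - l0) + m * (Y - k)) (- (k * (X - l0)))) as T1.
    pose proof (Rabs_triang (k * (m - l0)) (m * (Y - k))) as T2.
    rewrite Rabs_Ropp in T1.
    apply Rle_trans with
      (l0 * (Rabs (k * (m - l0)) + Rabs (m * (Y - k)) + Rabs (k * (X - l0))));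
      [apply Rmult_le_compat_l; lra|].
    pose proof (Rmult_le_compat_l l0 _ _ (Rlt_le _ _ Hl) HmY).
    pose proof (Rmult_le_compat_l l0 _ _ (Rlt_le _ _ Hl) HkX).
    nra.
Qed.

(* [(X, Y) = m (cos D, sin D) + k (- sin D, cos D)] says that two circles whose
   centers differ by [(X, Y)] are joined by a tangent segment of length [m] at
   heading [D], where [k = (s2 - s1) r] accounts for the turning directions. *)
Definition polar_solvable (l0 k K e0 : R) : Prop :=
  forall X Y e, 0 <= e <= e0 -> Rabs (X - l0) <= e -> Rabs (Y - k) <= e ->
  exists m D, l0 / 2 <= m <= 2 * l0 /\ Rabs D <= K * e /\ Rabs D <= 1 /\
    X = m * cos D - k * sin D /\ Y = m * sin D + k * cos D.

Lemma polar_perturbation (l0 k : R) : 0 < l0 ->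
  exists K e0, 0 < K /\ 0 < e0 /\ polar_solvable l0 k K e0.
Proof.
  intros Hl. pose proof (Rabs_pos k) as Hak.
  set (Cn := 3 * Rabs k * (l0 + Rabs k) + (2 * l0 + Rabs k) * l0).
  set (K := 4 * Cn / l0 ^ 3).
  assert (HK : 0 < K) by (unfold K, Cn; apply Rdiv_lt_0_compat; [nra|apply pow_lt; lra]).
  assert (Hb : 0 < l0 ^ 2 / (16 * (l0 + Rabs k))) by (apply Rdiv_lt_0_compat; nra).
  exists K, (Rmin (l0 ^ 2 / (16 * (l0 + Rabs k))) (1 / K)).
  split; [exact HK|split; [apply Rmin_pos; [exact Hb|apply Rdiv_lt_0_compat; lra]|]].
  intros X Y e [He0 He] HX HY.
  assert (Hsmall : 16 * (l0 + Rabs k) * e <= l0 ^ 2).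
  { rewrite Rmult_comm. apply Rle_div_r; [lra|].
    eapply Rle_trans; [exact He|apply Rmin_l]. }
  assert (HKe : K * e <= 1).
  { rewrite Rmult_comm. apply Rle_div_r; [lra|].
    eapply Rle_trans; [exact He|apply Rmin_r]. }
  pose proof (polar_norm_estimate l0 k X Y e Hl He0 Hsmall HX HY) as HQ.
  apply Rabs_le_between in HQ.
  set (m := sqrt (X ^ 2 + Y ^ 2 - k ^ 2)).
  assert (Hm2 : m ^ 2 = X ^ 2 + Y ^ 2 - k ^ 2) by (apply pow2_sqrt; nra).
  destruct (polar_estimates l0 k X Y e m) as [Hm [HDn HN]]; try apply sqrt_pos; auto.
  destruct (polar_solve_exact X Y k m) as [D [HD [EX EY]]]; [lra|exact Hm2|nra|].
  assert (HDK : Rabs D <= K * e).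
  { eapply Rle_trans; [exact HD|].
    rewrite Rabs_div, (Rabs_right (m * X + k * Y)) by nra.
    apply Rle_trans with (4 / l0 ^ 3 * (l0 * Rabs (m * Y - k * X))).
    - replace (4 / l0 ^ 3 * (l0 * Rabs (m * Y - k * X)))
        with (Rabs (m * Y - k * X) / (l0 ^ 2 / 4)) by (field; lra).
      apply Rmult_le_compat_l; [apply Rabs_pos|apply Rinv_le_contravar; nra].
    - unfold K. replace (4 * Cn / l0 ^ 3 * e) with (4 / l0 ^ 3 * (Cn * e)) by (field; lra).
      apply Rmult_le_compat_l; [apply Rlt_le, Rdiv_lt_0_compat; [lra|apply pow_lt; lra]|exact HN]. }
  exists m, D. repeat split; try lra.
Qed.

Lemma sin2_cos2_pow (x : R) : sin x ^ 2 + cos x ^ 2 = 1.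
Proof. pose proof (sin2_cos2 x) as H. unfold Rsqr in H. lra. Qed.

Lemma rotate_frame (ps Vx Vy l k D : R) :
  cos ps * Vx + sin ps * Vy = l * cos D - k * sin D ->
  - sin ps * Vx + cos ps * Vy = l * sin D + k * cos D ->
  Vx = l * cos (ps + D) - k * sin (ps + D) /\ Vy = l * sin (ps + D) + k * cos (ps + D).
Proof.
  intros H1 H2. rewrite cos_plus, sin_plus. pose proof (sin2_cos2_pow ps) as H.
  split.
  - transitivity (cos ps * (cos ps * Vx + sin ps * Vy) - sin ps * (- sin ps * Vx + cos ps * Vy)).
    + transitivity ((sin ps ^ 2 + cos ps ^ 2) * Vx); [rewrite H|]; ring.
    + rewrite H1, H2. ring.
  - transitivity (sin ps * (cos ps * Vx + sin ps * Vy) + cos ps * (- sin ps * Vx + cos ps * Vy)).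
    + transitivity ((sin ps ^ 2 + cos ps ^ 2) * Vy); [rewrite H|]; ring.
    + rewrite H1, H2. ring.
Qed.

Lemma tangent_length_remainder (l0 m k D : R) :
  0 < l0 -> l0 / 2 <= m <= 2 * l0 -> Rabs D <= 1 ->
  Rabs (m * (1 - cos D) - k * (D - sin D)) <= (l0 + Rabs k) * D ^ 2.
Proof.
  intros Hl Hm HD.
  unfold Rminus at 1. eapply Rle_trans; [apply Rabs_triang|].
  rewrite Rabs_Ropp, !Rabs_mult, (Rabs_right m) by lra.
  pose proof (one_minus_cos_bounds D). pose proof (sin_sub_id_le D) as Hs.
  rewrite Rabs_minus_sym in Hs. rewrite (Rabs_right (1 - cos D)) by lra.
  assert (Rabs D ^ 3 <= D ^ 2) by (rewrite <- pow2_abs; pose proof (Rabs_pos D); simpl; nra).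
  assert (m * (1 - cos D) <= 2 * l0 * (D ^ 2 / 2)) by (apply Rmult_le_compat; lra).
  assert (Rabs k * Rabs (D - sin D) <= Rabs k * (D ^ 2 / 2))
    by (apply Rmult_le_compat_l; [apply Rabs_pos|lra]).
  pose proof (Rabs_pos k). pose proof (pow2_ge_0 D). nra.
Qed.

Lemma tangent_angle_bound (l0 m k D e : R) :
  0 < l0 -> l0 / 2 <= m -> Rabs D <= 1 ->
  Rabs (m * sin D - k * (1 - cos D)) <= e -> l0 * Rabs D <= 4 * e + 2 * Rabs k * D ^ 2.
Proof.
  intros Hl Hm HD He.
  pose proof (Rabs_le_2_Rabs_sin D HD). pose proof (one_minus_cos_bounds D).
  assert (Hms : m * Rabs (sin D) <= e + Rabs k * (D ^ 2 / 2)).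
  { rewrite <- (Rabs_right m), <- Rabs_mult by lra.
    replace (m * sin D) with ((m * sin D - k * (1 - cos D)) + k * (1 - cos D)) by ring.
    eapply Rle_trans; [apply Rabs_triang|]. rewrite Rabs_mult, (Rabs_right (1 - cos D)) by lra.
    apply Rplus_le_compat; [exact He|apply Rmult_le_compat_l; [apply Rabs_pos|lra]]. }
  assert (l0 * Rabs D <= 2 * m * (2 * Rabs (sin D)))
    by (apply Rmult_le_compat; try lra; apply Rabs_pos).
  lra.
Qed.

Lemma rotated_center_frame (ps th d l k s Rm : R) :
  cos ps * (l * cos ps - k * sin ps + s * Rm * (sin th - sin (th + d))) +
  sin ps * (l * sin ps + k * cos ps + s * Rm * (cos (th + d) - cos th)) =
  l + s * Rm * (sin (th - ps) - sin (th + d - ps)) /\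
  - sin ps * (l * cos ps - k * sin ps + s * Rm * (sin th - sin (th + d))) +
  cos ps * (l * sin ps + k * cos ps + s * Rm * (cos (th + d) - cos th)) =
  k + s * Rm * (cos (th + d - ps) - cos (th - ps)).
Proof.
  rewrite !sin_minus, !cos_minus. pose proof (sin2_cos2_pow ps) as H.
  split.
  - transitivity (l * (sin ps ^ 2 + cos ps ^ 2) + s * Rm * (sin th * cos ps - cos th * sin ps
      - (sin (th + d) * cos ps - cos (th + d) * sin ps))); [ring|rewrite H; ring].
  - transitivity (k * (sin ps ^ 2 + cos ps ^ 2) + s * Rm * (cos (th + d) * cos ps
      + sin (th + d) * sin ps - (cos th * cos ps + sin th * sin ps))); [ring|rewrite H; ring].
Qed.

Lemma tangent_after_rotation (Rm s l0 k ps th d K e0 : R) :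
  polar_solvable l0 k K e0 -> 0 < Rm -> 0 < l0 -> (s = 1 \/ s = -1) -> Rm * Rabs d <= e0 ->
  exists m D, l0 / 2 <= m <= 2 * l0 /\ Rabs D <= K * (Rm * Rabs d) /\ Rabs D <= 1 /\
    l0 * cos ps - k * sin ps + s * Rm * (sin th - sin (th + d))
      = m * cos (ps + D) - k * sin (ps + D) /\
    l0 * sin ps + k * cos ps + s * Rm * (cos (th + d) - cos th)
      = m * sin (ps + D) + k * cos (ps + D) /\
    Rabs (m - k * D - l0 - s * Rm * (sin (th - ps) - sin (th + d - ps)))
      <= (l0 + Rabs k) * D ^ 2 /\
    (th = ps -> l0 * Rabs D <= 2 * Rm * d ^ 2 + 2 * Rabs k * D ^ 2).
Proof.
  intros Hsol HR Hl0 Hs Hd.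
  set (X := l0 + s * Rm * (sin (th - ps) - sin (th + d - ps))).
  set (Y := k + s * Rm * (cos (th + d - ps) - cos (th - ps))).
  assert (HsRm : forall z, Rabs (s * Rm * z) = Rm * Rabs z)
    by (intros z; rewrite !Rabs_mult, Rabs_sign, (Rabs_right Rm) by (assumption || lra); ring).
  assert (HX : Rabs (X - l0) <= Rm * Rabs d).
  { unfold X. replace (_ + _ - l0) with (s * Rm * (sin (th - ps) - sin (th + d - ps))) by ring.
    rewrite HsRm. apply Rmult_le_compat_l; [lra|].
    rewrite Rabs_minus_sym. eapply Rle_trans; [apply sin_lipschitz|].
    right. f_equal. ring. }
  assert (HY : Rabs (Y - k) <= Rm * Rabs d).
  { unfold Y. replace (_ + _ - k) with (s * Rm * (cos (th + d - ps) - cos (th - ps))) by ring.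
    rewrite HsRm. apply Rmult_le_compat_l; [lra|].
    eapply Rle_trans; [apply cos_lipschitz|]. right. f_equal. ring. }
  destruct (Hsol X Y (Rm * Rabs d)) as [m [D [Hm [HDK [HD1 [EX EY]]]]]]; auto.
  { split; [apply Rmult_le_pos; [lra|apply Rabs_pos]|exact Hd]. }
  destruct (rotated_center_frame ps th d l0 k s Rm) as [F1 F2].
  destruct (rotate_frame ps (l0 * cos ps - k * sin ps + s * Rm * (sin th - sin (th + d)))
      (l0 * sin ps + k * cos ps + s * Rm * (cos (th + d) - cos th)) m k D) as [W1 W2];
    [rewrite F1; exact EX|rewrite F2; exact EY|].
  exists m, D. do 5 (split; [assumption|]). split.
  - replace (m - k * D - l0 - s * Rm * (sin (th - ps) - sin (th + d - ps)))
      with (m - k * D - X) by (unfold X; ring).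
    rewrite EX. replace (m - k * D - (m * cos D - k * sin D))
      with (m * (1 - cos D) - k * (D - sin D)) by ring.
    apply tangent_length_remainder; assumption.
  - intros <-. replace (2 * Rm * d ^ 2) with (4 * (Rm * (d ^ 2 / 2))) by field.
    apply (tangent_angle_bound l0 m k D); try lra.
    replace (m * sin D - k * (1 - cos D)) with (Y - k) by (rewrite EY; ring).
    unfold Y. rewrite Rminus_diag, cos_0. replace (th + d - th) with d by ring.
    replace (_ + _ - k) with (- (s * Rm * (1 - cos d))) by ring.
    rewrite Rabs_Ropp, HsRm. pose proof (one_minus_cos_bounds d).
    rewrite Rabs_right by lra. apply Rmult_le_compat_l; lra.
Qed.

(** * Rotating the middle circle about the midpoint *)

Lemma cos_sign_mul (s x : R) : (s = 1 \/ s = -1) -> cos (s * x) = cos x.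
Proof.
  intros [-> | ->]; [f_equal; ring|].
  replace (-1 * x) with (- x) by ring. apply cos_neg.
Qed.

Lemma rotation_first_order (Rm s u w d : R) :
  0 < Rm -> (s = 1 \/ s = -1) -> Rabs d <= 1 ->
  - s * Rm * (sin (s * u + d) - sin (s * u)) + s * Rm * (sin (- (s * w) + d) - sin (- (s * w)))
  <= s * d * Rm * (cos w - cos u) + 2 * Rm * d ^ 2.
Proof.
  intros HR Hs Hd.
  pose proof (sin_add_linear_approx (s * u) d Hd) as H1.
  pose proof (sin_add_linear_approx (- (s * w)) d Hd) as H2.
  rewrite cos_sign_mul in H1 by exact Hs. rewrite cos_neg, cos_sign_mul in H2 by exact Hs.
  set (r1 := sin (s * u + d) - sin (s * u) - d * cos u) in H1.
  set (r2 := sin (- (s * w) + d) - sin (- (s * w)) - d * cos w) in H2.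
  replace (- s * Rm * (sin (s * u + d) - sin (s * u)) + s * Rm * (sin (- (s * w) + d) - sin (- (s * w))))
    with (s * d * Rm * (cos w - cos u) + s * Rm * (r2 - r1)) by (unfold r1, r2; ring).
  apply Rplus_le_compat_l.
  eapply Rle_trans; [apply Rle_abs|].
  rewrite !Rabs_mult, Rabs_sign, (Rabs_right Rm) by (assumption || lra).
  replace (r2 - r1) with (r2 + - r1) by ring.
  pose proof (Rabs_triang r2 (- r1)) as T. rewrite Rabs_Ropp in T.
  replace (2 * Rm * d ^ 2) with (1 * Rm * (2 * d ^ 2)) by ring.
  apply Rmult_le_compat_l; lra.
Qed.

Lemma end_arc_nonneg (Rm T s D b : R) : 0 < Rm -> (s = 1 \/ s = -1) ->
  Rabs D <= b -> Rm * b <= T -> 0 <= T + s * Rm * D /\ 0 <= T - s * Rm * D.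
Proof.
  intros HR Hs HD Hb.
  assert (HsD : Rabs (s * Rm * D) <= T).
  { rewrite !Rabs_mult, Rabs_sign, (Rabs_right Rm) by (assumption || lra).
    apply Rle_trans with (Rm * b); [|exact Hb]. rewrite Rmult_1_l.
    apply Rmult_le_compat_l; lra. }
  apply Rabs_le_between in HsD. lra.
Qed.

Lemma eventually_mul_le (C B : R) : 0 < B -> at_right 0 (fun eta => C * eta <= B).
Proof.
  intros HB. pose proof (Rabs_pos C).
  assert (Hd : 0 < B / (Rabs C + 1)) by (apply Rdiv_lt_0_compat; lra).
  exists (mkposreal _ Hd). intros eta Heta Hpos. simpl in Heta.
  apply Rabs_lt_between in Heta.
  change (minus eta 0) with (eta - 0) in Heta. rewrite Rminus_0_r in Heta.
  apply Rle_trans with ((Rabs C + 1) * (B / (Rabs C + 1))); [|right; field; lra].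
  apply Rle_trans with ((Rabs C + 1) * eta); [pose proof (Rle_abs C); nra|].
  apply Rmult_le_compat_l; lra.
Qed.

Lemma eventually_pos : at_right 0 (fun eta => 0 < eta).
Proof. exists (mkposreal 1 Rlt_0_1). intros eta _ H. exact H. Qed.

Lemma eventually_mul_le_if_pos (C v B : R) :
  (0 < v -> 0 < B) -> at_right 0 (fun eta => 0 < v -> C * eta <= B).
Proof.
  intros HB. destruct (Rlt_dec 0 v) as [Hv|Hv].
  - generalize (eventually_mul_le C B (HB Hv)). apply filter_imp. intros eta H _. exact H.
  - apply filter_forall. intros eta Hv'. contradiction.
Qed.

Lemma rotation_direction (u w : R) : 0 <= u -> 0 <= w -> cos u <> cos w ->
  exists sg, (sg = 1 \/ sg = -1) /\ sg * (cos w - cos u) = - Rabs (cos w - cos u) /\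
    (u = 0 -> sg = 1) /\ (w = 0 -> sg = -1).
Proof.
  intros Hu Hw NE. pose proof (COS_bound u). pose proof (COS_bound w).
  destruct (Rle_dec 0 (cos w - cos u)) as [Ha|Ha].
  - exists (-1). rewrite Rabs_right by lra.
    split; [right; reflexivity|split; [ring|split; [|reflexivity]]].
    intros Hu0. rewrite Hu0, cos_0 in *. lra.
  - exists 1. rewrite Rabs_left by lra.
    split; [left; reflexivity|split; [ring|split; [reflexivity|]]].
    intros Hw0. rewrite Hw0, cos_0 in *. lra.
Qed.

Lemma refined_angle_bound (l Rm k K D eta : R) : 0 < l ->
  Rabs D <= K * (Rm * eta) -> l * Rabs D <= 2 * Rm * eta ^ 2 + 2 * Rabs k * D ^ 2 ->
  Rabs D <= (2 * Rm + 2 * Rabs k * (K * Rm) ^ 2) / l * eta ^ 2.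
Proof.
  intros Hl HD Href.
  pose proof (pow_maj_Rabs _ _ 2 HD) as HD2.
  apply Rmult_le_reg_l with l; [exact Hl|].
  replace (l * ((2 * Rm + 2 * Rabs k * (K * Rm) ^ 2) / l * eta ^ 2))
    with (2 * Rm * eta ^ 2 + 2 * Rabs k * (K * (Rm * eta)) ^ 2) by (field; lra).
  pose proof (Rabs_pos k). nra.
Qed.

(* When [v = 0] the rotation must lengthen the arc ([s x = eta]); this is
   possible because the turn [D] of the adjacent tangent is then of second order. *)
Lemma arc_after_rotation_nonneg (Rm s v x D K l k eta : R) :
  0 < Rm -> (s = 1 \/ s = -1) -> 0 <= v -> 0 < l -> Rabs x = eta ->
  Rabs D <= K * (Rm * eta) ->
  (v = 0 -> s * x = eta /\ l * Rabs D <= 2 * Rm * eta ^ 2 + 2 * Rabs k * D ^ 2) ->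
  (0 < v -> (Rm + Rm * (K * Rm)) * eta <= Rm * v) ->
  (2 * Rm + 2 * Rabs k * (K * Rm) ^ 2) / l * eta <= 1 ->
  0 <= Rm * v + s * Rm * (x - D).
Proof.
  intros HR Hs Hv Hl Hx HD H0 Hpos HC.
  assert (Heta : 0 <= eta) by (rewrite <- Hx; apply Rabs_pos).
  replace (Rm * v + s * Rm * (x - D)) with (Rm * v + Rm * (s * x - s * D)) by ring.
  pose proof (Rle_abs (s * D)) as HsD. rewrite Rabs_mult, (Rabs_sign s Hs), Rmult_1_l in HsD.
  destruct (Rle_lt_or_eq_dec 0 v Hv) as [Hv0|<-].
  - pose proof (Rle_abs (- (s * x))) as Hsx.
    rewrite Rabs_Ropp, Rabs_mult, (Rabs_sign s Hs), Rmult_1_l, Hx in Hsx.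
    assert (Rm * (- eta - K * (Rm * eta)) <= Rm * (s * x - s * D))
      by (apply Rmult_le_compat_l; lra).
    specialize (Hpos Hv0). nra.
  - destruct (H0 eq_refl) as [-> Href].
    pose proof (refined_angle_bound l Rm k K D eta Hl HD Href) as HD2.
    assert (Rabs D <= eta).
    { apply Rle_trans with (1 := HD2).
      replace ((2 * Rm + 2 * Rabs k * (K * Rm) ^ 2) / l * eta ^ 2)
        with ((2 * Rm + 2 * Rabs k * (K * Rm) ^ 2) / l * eta * eta) by ring.
      apply Rle_trans with (1 * eta); [apply Rmult_le_compat_r|]; lra. }
    rewrite Rmult_0_r, Rplus_0_l. apply Rmult_le_pos; lra.
Qed.

Section Middle_circle_rotation.

Variables (Rm s1 s3 s5 : R) (c1 c5 xm : pt) (ps0 th ps4 u w l2 l4 T1 T5 : R).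
Hypotheses (HR : 0 < Rm) (Hs1 : s1 = 1 \/ s1 = -1) (Hs3 : s3 = 1 \/ s3 = -1)
  (Hs5 : s5 = 1 \/ s5 = -1) (Hl2 : 0 < l2) (Hl4 : 0 < l4) (HT1 : 0 < T1) (HT5 : 0 < T5)
  (Hu : 0 <= u) (Hw : 0 <= w) (Hth : th = ps0 + s3 * u) (Hps4 : ps4 = th + s3 * w)
  (Htan2 : tangent_segment c1 s1 (turn_center xm s3 Rm th) s3 Rm l2 ps0)
  (Htan4 : tangent_segment (turn_center xm s3 Rm th) s3 c5 s5 Rm l4 ps4).

Let k2 := (s3 - s1) * Rm.
Let k4 := (s5 - s3) * Rm.

Lemma rotated_tangent_S2 (K e0 d : R) :
  polar_solvable l2 k2 K e0 -> Rm * Rabs d <= e0 ->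
  exists m D, 0 <= m /\ Rabs D <= K * (Rm * Rabs d) /\ Rabs D <= 1 /\
    tangent_segment c1 s1 (turn_center xm s3 Rm (th + d)) s3 Rm m (ps0 + D) /\
    m - k2 * D - l2 <= - s3 * Rm * (sin (s3 * u + d) - sin (s3 * u)) + (l2 + Rabs k2) * D ^ 2 /\
    (u = 0 -> l2 * Rabs D <= 2 * Rm * d ^ 2 + 2 * Rabs k2 * D ^ 2).
Proof.
  intros Hsol Hd.
  destruct (tangent_after_rotation Rm s3 l2 k2 ps0 th d K e0 Hsol HR Hl2 Hs3 Hd)
    as [m [D [Hm [HDK [HD1 [W1 [W2 [Hlen Href]]]]]]]].
  exists m, D. split; [lra|]. do 2 (split; [assumption|]). split; [|split].
  - apply tangent_segment_iff in Htan2 as [E1 E2]. apply tangent_segment_iff.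
    unfold turn_center, k2 in *. simpl in *. split; lra.
  - replace (th - ps0) with (s3 * u) in Hlen by (rewrite Hth; ring).
    replace (th + d - ps0) with (s3 * u + d) in Hlen by (rewrite Hth; ring).
    apply Rabs_le_between in Hlen. lra.
  - intros Hu0. apply Href. rewrite Hth, Hu0. ring.
Qed.

Lemma rotated_tangent_S4 (K e0 d : R) :
  polar_solvable l4 k4 K e0 -> Rm * Rabs d <= e0 ->
  exists m D, 0 <= m /\ Rabs D <= K * (Rm * Rabs d) /\ Rabs D <= 1 /\
    tangent_segment (turn_center xm s3 Rm (th + d)) s3 c5 s5 Rm m (ps4 + D) /\
    m - k4 * D - l4
      <= s3 * Rm * (sin (- (s3 * w) + d) - sin (- (s3 * w))) + (l4 + Rabs k4) * D ^ 2 /\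
    (w = 0 -> l4 * Rabs D <= 2 * Rm * d ^ 2 + 2 * Rabs k4 * D ^ 2).
Proof.
  intros Hsol Hd.
  assert (Hms3 : - s3 = 1 \/ - s3 = -1) by (destruct Hs3 as [-> | ->]; [right|left]; ring).
  destruct (tangent_after_rotation Rm (- s3) l4 k4 ps4 th d K e0 Hsol HR Hl4 Hms3 Hd)
    as [m [D [Hm [HDK [HD1 [W1 [W2 [Hlen Href]]]]]]]].
  exists m, D. split; [lra|]. do 2 (split; [assumption|]). split; [|split].
  - apply tangent_segment_iff in Htan4 as [E1 E2]. apply tangent_segment_iff.
    unfold turn_center, k4 in *. simpl in *. split; lra.
  - replace (th - ps4) with (- (s3 * w)) in Hlen by (rewrite Hps4; ring).
    replace (th + d - ps4) with (- (s3 * w) + d) in Hlen by (rewrite Hps4; ring).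
    apply Rabs_le_between in Hlen. lra.
  - intros Hw0. apply Href. rewrite Hps4, Hw0. ring.
Qed.

(* Optimality against the paths in which the middle circle is rotated about [xm]
   by [d] while the first and last circles stay fixed: the tangents then turn by
   [D2], [D4] and get lengths [m2], [m4], and the arcs change accordingly.  The
   conclusion is "the new path is not shorter" after cancellation. *)
Hypothesis Hopt : forall d D2 D4 m2 m4, 0 <= m2 -> 0 <= m4 ->
  0 <= T1 + s1 * Rm * D2 -> 0 <= Rm * u + s3 * Rm * (d - D2) ->
  0 <= Rm * w + s3 * Rm * (D4 - d) -> 0 <= T5 - s5 * Rm * D4 ->
  tangent_segment c1 s1 (turn_center xm s3 Rm (th + d)) s3 Rm m2 (ps0 + D2) ->
  tangent_segment (turn_center xm s3 Rm (th + d)) s3 c5 s5 Rm m4 (ps4 + D4) ->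
  l2 + l4 <= m2 + m4 - k2 * D2 - k4 * D4.

Lemma rotation_not_shorter (K2 e2 K4 e4 sg eta : R) :
  polar_solvable l2 k2 K2 e2 -> polar_solvable l4 k4 K4 e4 ->
  (sg = 1 \/ sg = -1) -> sg * (cos w - cos u) = - Rabs (cos w - cos u) ->
  (u = 0 -> sg = 1) -> (w = 0 -> sg = -1) ->
  0 < eta -> eta <= 1 -> Rm * eta <= e2 -> Rm * eta <= e4 ->
  Rm * (K2 * Rm) * eta <= T1 -> Rm * (K4 * Rm) * eta <= T5 ->
  (0 < u -> (Rm + Rm * (K2 * Rm)) * eta <= Rm * u) ->
  (0 < w -> (Rm + Rm * (K4 * Rm)) * eta <= Rm * w) ->
  (2 * Rm + 2 * Rabs k2 * (K2 * Rm) ^ 2) / l2 * eta <= 1 ->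
  (2 * Rm + 2 * Rabs k4 * (K4 * Rm) ^ 2) / l4 * eta <= 1 ->
  Rm * Rabs (cos w - cos u) * eta
    <= (2 * Rm + (l2 + Rabs k2) * (K2 * Rm) ^ 2 + (l4 + Rabs k4) * (K4 * Rm) ^ 2) * eta ^ 2.
Proof.
  intros Hsol2 Hsol4 Hsg Hsga Hsg1 Hsg2 Heta Heta1 He2 He4 HT1' HT5' Hu' Hw' HC2 HC4.
  set (d := s3 * sg * eta).
  assert (Hs33 : s3 * s3 = 1) by (destruct Hs3 as [-> | ->]; ring).
  assert (Hd : Rabs d = eta).
  { unfold d. rewrite !Rabs_mult, !Rabs_sign, Rabs_right by (assumption || lra). ring. }
  assert (Hs3d : s3 * d = sg * eta) by (unfold d; rewrite <- !Rmult_assoc, Hs33; ring).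
  assert (Hd2 : d ^ 2 = eta ^ 2) by (rewrite <- Hd, pow2_abs; reflexivity).
  assert (HRd : Rm * Rabs d = Rm * eta) by (rewrite Hd; reflexivity).
  destruct (rotated_tangent_S2 K2 e2 d Hsol2) as [m2 [D2 [Hm2 [HD2 [HD2' [T2 [L2 R2]]]]]]];
    [lra|].
  destruct (rotated_tangent_S4 K4 e4 d Hsol4) as [m4 [D4 [Hm4 [HD4 [HD4' [T4 [L4 R4]]]]]]];
    [lra|].
  rewrite HRd in HD2, HD4.
  destruct (end_arc_nonneg Rm T1 s1 D2 (K2 * (Rm * eta))) as [A1 _]; auto; [lra|].
  destruct (end_arc_nonneg Rm T5 s5 D4 (K4 * (Rm * eta))) as [_ A5]; auto; [lra|].
  assert (B1 : 0 <= Rm * u + s3 * Rm * (d - D2)).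
  { apply (arc_after_rotation_nonneg Rm s3 u d D2 K2 l2 k2 eta); auto.
    intros Hu0. rewrite Hs3d, (Hsg1 Hu0), <- Hd2. split; [ring|auto]. }
  assert (B2 : 0 <= Rm * w + s3 * Rm * (D4 - d)).
  { replace (s3 * Rm * (D4 - d)) with (- s3 * Rm * (d - D4)) by ring.
    apply (arc_after_rotation_nonneg Rm (- s3) w d D4 K4 l4 k4 eta); auto.
    - destruct Hs3 as [-> | ->]; [right|left]; ring.
    - intros Hw0. replace (- s3 * d) with (- (s3 * d)) by ring.
      rewrite Hs3d, (Hsg2 Hw0), <- Hd2. split; [ring|auto]. }
  pose proof (Hopt d D2 D4 m2 m4 Hm2 Hm4 A1 B1 B2 A5 T2 T4) as Hle.
  pose proof (rotation_first_order Rm s3 u w d HR Hs3 ltac:(lra)) as Hfo.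
  assert (Hlin : s3 * d * Rm * (cos w - cos u) = Rm * (- Rabs (cos w - cos u)) * eta)
    by (rewrite Hs3d, <- Hsga; ring).
  rewrite Hlin, Hd2 in Hfo.
  pose proof (pow_maj_Rabs _ _ 2 HD2). pose proof (pow_maj_Rabs _ _ 2 HD4).
  pose proof (Rabs_pos k2). pose proof (Rabs_pos k4).
  assert ((l2 + Rabs k2) * D2 ^ 2 <= (l2 + Rabs k2) * (K2 * (Rm * eta)) ^ 2)
    by (apply Rmult_le_compat_l; lra).
  assert ((l4 + Rabs k4) * D4 ^ 2 <= (l4 + Rabs k4) * (K4 * (Rm * eta)) ^ 2)
    by (apply Rmult_le_compat_l; lra).
  lra.
Qed.

Lemma balanced_arc_angles : cos u = cos w.
Proof.
  destruct (Req_dec (cos u) (cos w)) as [|NE]; [assumption|exfalso].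
  destruct (rotation_direction u w Hu Hw NE) as [sg [Hsg [Hsga [Hsg1 Hsg2]]]].
  destruct (polar_perturbation l2 k2 Hl2) as [K2 [e2 [HK2 [He2 Hsol2]]]].
  destruct (polar_perturbation l4 k4 Hl4) as [K4 [e4 [HK4 [He4 Hsol4]]]].
  set (A := Rm * Rabs (cos w - cos u)).
  assert (HA : 0 < A) by (apply Rmult_lt_0_compat; [lra|apply Rabs_pos_lt; lra]).
  set (CE := 2 * Rm + (l2 + Rabs k2) * (K2 * Rm) ^ 2 + (l4 + Rabs k4) * (K4 * Rm) ^ 2).
  assert (Hev : at_right 0 (fun eta => 0 < eta /\ 1 * eta <= 1 /\
    Rm * eta <= e2 /\ Rm * eta <= e4 /\
    Rm * (K2 * Rm) * eta <= T1 /\ Rm * (K4 * Rm) * eta <= T5 /\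
    (0 < u -> (Rm + Rm * (K2 * Rm)) * eta <= Rm * u) /\
    (0 < w -> (Rm + Rm * (K4 * Rm)) * eta <= Rm * w) /\
    (2 * Rm + 2 * Rabs k2 * (K2 * Rm) ^ 2) / l2 * eta <= 1 /\
    (2 * Rm + 2 * Rabs k4 * (K4 * Rm) ^ 2) / l4 * eta <= 1 /\ CE * eta <= A / 2)).
  { repeat apply filter_and;
      first [apply eventually_pos|apply eventually_mul_le_if_pos|apply eventually_mul_le];
      intros; try lra; apply Rmult_lt_0_compat; lra. }
  destruct (filter_ex _ Hev)
    as [eta [Heta [H1 [He2' [He4' [HT1' [HT5' [Hu' [Hw' [HC2 [HC4 HCE]]]]]]]]]]].
  pose proof (rotation_not_shorter K2 e2 K4 e4 sg eta Hsol2 Hsol4 Hsg Hsga Hsg1 Hsg2 Heta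
    ltac:(lra) He2' He4' HT1' HT5' Hu' Hw' HC2 HC4) as Hlen.
  fold A CE in Hlen.
  assert (CE * eta * eta <= A / 2 * eta) by (apply Rmult_le_compat_r; lra).
  assert (0 < A * eta) by (apply Rmult_lt_0_compat; lra).
  lra.
Qed.

End Middle_circle_rotation.

(** * Inversion of a line *)

Definition line_offset (O P : pt) (ps : R) : R :=
  - sin ps * (fst O - fst P) + cos ps * (snd O - snd P).

Lemma line_offset_advance (O P : pt) (l ps : R) :
  line_offset O (advance P l ps) ps = line_offset O P ps.
Proof. unfold line_offset, advance. simpl. ring. Qed.

Lemma line_offset_turn_point (c : pt) (s r th ps : R) :
  line_offset (turn_point c s r th) (turn_point c s r ps) ps = s * r * (1 - cos (th - ps)).
Proof.
  unfold line_offset, turn_point. simpl. rewrite cos_minus.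
  pose proof (sin2_cos2_pow ps) as H.
  transitivity (s * r * ((sin ps ^ 2 + cos ps ^ 2) - (cos th * cos ps + sin th * sin ps)));
    [ring|rewrite H; reflexivity].
Qed.

Lemma line_through_advance_iff (P X : pt) (l ps : R) : l <> 0 ->
  line_through P (advance P l ps) X <-> line_offset X P ps = 0.
Proof.
  intros Hl. destruct P as [p1 p2], X as [x1 x2].
  unfold line_through, line_offset, advance. simpl. split.
  - intros [s Hs]. injection Hs as -> ->. ring.
  - intros H0. exists (((x1 - p1) * cos ps + (x2 - p2) * sin ps) / l).
    pose proof (sin2_cos2_pow ps) as H. f_equal.
    + transitivity (p1 + (x1 - p1) * (sin ps ^ 2 + cos ps ^ 2)
        + sin ps * (- sin ps * (x1 - p1) + cos ps * (x2 - p2))); [rewrite H0, H; ring|field; lra].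
    + transitivity (p2 + (x2 - p2) * (sin ps ^ 2 + cos ps ^ 2)
        - cos ps * (- sin ps * (x1 - p1) + cos ps * (x2 - p2))); [rewrite H0, H; ring|field; lra].
Qed.

Lemma pdist_sq (p q : pt) : pdist p q ^ 2 = (fst p - fst q) ^ 2 + (snd p - snd q) ^ 2.
Proof. unfold pdist. apply pow2_sqrt. apply Rplus_le_le_0_compat; apply pow2_ge_0. Qed.

Lemma neq_pt_sq_pos (p q : pt) : p <> q -> 0 < (fst p - fst q) ^ 2 + (snd p - snd q) ^ 2.
Proof.
  intros Hpq. destruct p as [p1 p2], q as [q1 q2]. simpl.
  pose proof (pow2_ge_0 (p1 - q1)). pose proof (pow2_ge_0 (p2 - q2)).
  destruct (Req_dec p1 q1) as [<-|H1].
  - destruct (Req_dec p2 q2) as [<-|H2]; [contradiction|].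
    assert (0 < (p2 - q2) ^ 2) by (apply pow2_gt_0; lra). lra.
  - assert (0 < (p1 - q1) ^ 2) by (apply pow2_gt_0; lra). lra.
Qed.

Lemma inversion_involutive (O X : pt) (r : R) :
  0 < r -> X <> O -> inversion O r (inversion O r X) = X.
Proof.
  intros Hr HX. pose proof (neq_pt_sq_pos X O HX) as Hm.
  destruct O as [o1 o2], X as [x1 x2]. unfold inversion. rewrite !pdist_sq. cbn [fst snd] in *.
  replace ((o1 - x1) ^ 2 + (o2 - x2) ^ 2) with ((x1 - o1) ^ 2 + (x2 - o2) ^ 2) by ring.
  remember ((x1 - o1) ^ 2 + (x2 - o2) ^ 2) as m eqn:Em.
  replace ((o1 - (o1 + r ^ 2 / m * (x1 - o1))) ^ 2 + (o2 - (o2 + r ^ 2 / m * (x2 - o2))) ^ 2)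
    with ((r ^ 2 / m) ^ 2 * ((x1 - o1) ^ 2 + (x2 - o2) ^ 2)) by ring.
  rewrite <- Em. f_equal; field; lra.
Qed.

Lemma inversion_neq_center (O X : pt) (r : R) : 0 < r -> X <> O -> inversion O r X <> O.
Proof.
  intros Hr HX E. apply HX. pose proof (neq_pt_sq_pos X O HX) as Hm.
  destruct O as [o1 o2], X as [x1 x2]. unfold inversion in E. rewrite pdist_sq in E.
  pose proof (f_equal fst E) as E1. pose proof (f_equal snd E) as E2.
  cbn [fst snd] in *.
  assert (Hk : r ^ 2 / ((o1 - x1) ^ 2 + (o2 - x2) ^ 2) <> 0).
  { apply Rgt_not_eq, Rdiv_lt_0_compat; [apply pow_lt; lra|].
    replace ((o1 - x1) ^ 2 + (o2 - x2) ^ 2) with ((x1 - o1) ^ 2 + (x2 - o2) ^ 2) by ring.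
    exact Hm. }
  set (k := r ^ 2 / ((o1 - x1) ^ 2 + (o2 - x2) ^ 2)) in *.
  assert (H1 : k * (x1 - o1) = 0) by lra. assert (H2 : k * (x2 - o2) = 0) by lra.
  apply Rmult_integral in H1 as [|H1]; [contradiction|].
  apply Rmult_integral in H2 as [|H2]; [contradiction|].
  f_equal; lra.
Qed.

Lemma inversion_line_circle_iff (O P Y : pt) (ps r : R) :
  0 < r -> Y <> O -> line_offset O P ps <> 0 ->
  pdist Y (fst O + r ^ 2 / (2 * line_offset O P ps) * sin ps,
           snd O - r ^ 2 / (2 * line_offset O P ps) * cos ps)
    = r ^ 2 / (2 * Rabs (line_offset O P ps)) <->
  line_offset (inversion O r Y) P ps = 0.
Proof.
  intros Hr HY Hh. pose proof (neq_pt_sq_pos Y O HY) as Hm.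
  pose proof (sin2_cos2_pow ps) as Hsc.
  set (h := line_offset O P ps) in *.
  set (m := (fst Y - fst O) ^ 2 + (snd Y - snd O) ^ 2) in *.
  set (q := - sin ps * (fst Y - fst O) + cos ps * (snd Y - snd O)).
  assert (E1 : line_offset (inversion O r Y) P ps = (h * m + r ^ 2 * q) / m).
  { unfold line_offset at 1, inversion. rewrite pdist_sq. cbn [fst snd].
    replace ((fst O - fst Y) ^ 2 + (snd O - snd Y) ^ 2) with m by (unfold m; ring).
    unfold h, q, line_offset. field. lra. }
  assert (E2 : pdist Y (fst O + r ^ 2 / (2 * h) * sin ps, snd O - r ^ 2 / (2 * h) * cos ps) ^ 2
               = (r ^ 2 / (2 * Rabs h)) ^ 2 + (h * m + r ^ 2 * q) / h).
  { rewrite pdist_sq. cbn [fst snd].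
    transitivity (m + r ^ 2 * q / h + r ^ 4 / (4 * h ^ 2) * (sin ps ^ 2 + cos ps ^ 2));
      [unfold m, q; field; exact Hh|].
    assert (Habs : Rabs h <> 0) by (apply Rabs_no_R0; exact Hh).
    rewrite Hsc, <- (pow2_abs h). field. split; assumption. }
  split.
  - intros Hd. rewrite Hd in E2. rewrite E1.
    assert (Hz : (h * m + r ^ 2 * q) / h = 0) by lra.
    replace (h * m + r ^ 2 * q) with ((h * m + r ^ 2 * q) / h * h) by (field; exact Hh).
    rewrite Hz. unfold Rdiv. ring.
  - intros H0. rewrite E1 in H0.
    assert (Hz : h * m + r ^ 2 * q = 0).
    { replace (h * m + r ^ 2 * q) with ((h * m + r ^ 2 * q) / m * m) by (field; lra).
      rewrite H0. ring. }
    rewrite Hz, Rdiv_0_l, Rplus_0_r in E2.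
    unfold pdist in E2 |- *. rewrite pow2_sqrt in E2 by (apply Rplus_le_le_0_compat; apply pow2_ge_0).
    rewrite E2. apply sqrt_pow2.
    apply Rlt_le, Rdiv_lt_0_compat; [apply pow_lt; lra|].
    pose proof (Rabs_pos_lt h Hh). lra.
Qed.

Lemma inverse_line_is_circle (O P : pt) (ps l r : R) :
  l <> 0 -> 0 < r -> line_offset O P ps <> 0 ->
  is_circle_off O (inverse_set O r (line_through P (advance P l ps)))
    (fst O + r ^ 2 / (2 * line_offset O P ps) * sin ps,
     snd O - r ^ 2 / (2 * line_offset O P ps) * cos ps)
    (r ^ 2 / (2 * Rabs (line_offset O P ps))).
Proof.
  intros Hl Hr Hh. split.
  { apply Rdiv_lt_0_compat; [apply pow_lt; lra|]. pose proof (Rabs_pos_lt _ Hh). lra. }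
  intros Y HY. rewrite inversion_line_circle_iff by assumption. split.
  - intros [X [HX [HXO ->]]]. rewrite inversion_involutive by assumption.
    apply line_through_advance_iff in HX; assumption.
  - intros Hoff. exists (inversion O r Y).
    split; [apply line_through_advance_iff; assumption|].
    split; [apply inversion_neq_center; assumption|].
    symmetry. apply inversion_involutive; assumption.
Qed.

(** * Optimal CSCSC paths *)

Lemma turn_point_sub_2PI (c : pt) (s r th n : R) : (n = -1 \/ n = 0 \/ n = 1) ->
  turn_point c s r (th - 2 * PI * n) = turn_point c s r th.
Proof.
  intros Hn. destruct (sin_cos_sub_2PI_mult n th Hn) as [Hs Hc].
  unfold turn_point. rewrite Hs, Hc. reflexivity.
Qed.

Lemma tangent_segment_sub_2PI (c1 c2 : pt) (s1 s2 r l ps n : R) : (n = -1 \/ n = 0 \/ n = 1) ->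
  tangent_segment c1 s1 c2 s2 r l ps -> tangent_segment c1 s1 c2 s2 r l (ps - 2 * PI * n).
Proof.
  intros Hn. destruct (sin_cos_sub_2PI_mult n ps Hn) as [Hs Hc].
  rewrite !tangent_segment_iff, Hs, Hc. auto.
Qed.

Lemma curvature_sign (Rm k : R) : 0 < Rm -> (k = 1 / Rm \/ k = - (1 / Rm)) ->
  exists s, (s = 1 \/ s = -1) /\ k = s / Rm.
Proof. intros HR [-> | ->]; [exists 1|exists (-1)]; split; auto; field; lra. Qed.

Section Optimal_CSCSC_path.

Variables (Rm : R) (Xi Xf : config) (xm : pt) (L : R) (x y a : R -> R)
  (t1 t2 t3 t4 tm s1 s3 s5 : R).
Hypotheses (HR : 0 < Rm) (Hs1 : s1 = 1 \/ s1 = -1) (Hs3 : s3 = 1 \/ s3 = -1)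
  (Hs5 : s5 = 1 \/ s5 = -1) (Hopt : optimal_three_point_path Rm Xi xm Xf L x y a)
  (Ht1 : 0 < t1) (Ht12 : t1 < t2) (Ht23 : t2 < t3) (Ht34 : t3 < t4) (Ht4L : t4 < L)
  (Htm : t2 <= tm <= t3) (Hxm : (x tm, y tm) = xm)
  (Harc1 : forall t, 0 <= t <= t1 -> a t = a 0 + s1 / Rm * (t - 0))
  (Hseg2 : straight_on a t1 t2)
  (Harc3 : forall t, t2 <= t <= t3 -> a t = a t2 + s3 / Rm * (t - t2))
  (Hseg4 : straight_on a t3 t4)
  (Harc5 : forall t, t4 <= t <= L -> a t = a t4 + s5 / Rm * (t - t4)).

Let c1 := turn_center (x 0, y 0) s1 Rm (a 0).
Let c3 := turn_center xm s3 Rm (a tm).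
Let c5 := turn_center (x L, y L) s5 Rm (a L).
Let u := (tm - t2) / Rm.
Let w := (t3 - tm) / Rm.

Lemma path_traj : dubins_traj Rm L x y a.
Proof. exact (proj1 (proj1 Hopt)). Qed.

Lemma heading_t1 : a t1 = a 0 + s1 * t1 / Rm.
Proof. rewrite (Harc1 t1) by lra. unfold Rdiv. ring. Qed.

Lemma heading_t2 : a t2 = a t1.
Proof. apply Hseg2. lra. Qed.

Lemma heading_tm : a tm = a t1 + s3 * u.
Proof. rewrite (Harc3 tm), heading_t2 by lra. unfold u, Rdiv. ring. Qed.

Lemma heading_t3 : a t3 = a tm + s3 * w.
Proof. rewrite (Harc3 t3), (Harc3 tm) by lra. unfold w, Rdiv. ring. Qed.

Lemma heading_L : a L = a t3 + s5 * (L - t4) / Rm.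
Proof. rewrite (Harc5 L), (Hseg4 t4) by lra. unfold Rdiv. ring. Qed.

Lemma point_t1 : turn_point c1 s1 Rm (a t1) = (x t1, y t1).
Proof.
  unfold c1. rewrite <- (arc_turn_center_const Rm L s1 0 t1 x y a) by (auto using path_traj; lra).
  apply turn_point_center.
Qed.

Lemma middle_center (t : R) : t2 <= t <= t3 ->
  turn_center (x t, y t) s3 Rm (a t) = turn_center (x t2, y t2) s3 Rm (a t2).
Proof.
  intros Ht. apply (arc_turn_center_const Rm L s3 t2 t x y a); auto using path_traj; try lra.
  intros t' Ht'. apply Harc3. lra.
Qed.

Lemma point_t2 : turn_point c3 s3 Rm (a t2) = (x t2, y t2).
Proof. unfold c3. rewrite <- Hxm, middle_center by lra. apply turn_point_center. Qed.

Lemma point_t3 : turn_point c3 s3 Rm (a t3) = (x t3, y t3).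
Proof.
  unfold c3. rewrite <- Hxm, middle_center, <- (middle_center t3) by lra.
  apply turn_point_center.
Qed.

Lemma point_t4 : turn_point c5 s5 Rm (a t4) = (x t4, y t4).
Proof.
  unfold c5. rewrite (arc_turn_center_const Rm L s5 t4 L x y a) by (auto using path_traj; lra).
  apply turn_point_center.
Qed.

Lemma segment_S2 : (x t2, y t2) = advance (x t1, y t1) (t2 - t1) (a t1).
Proof. apply (segment_advance Rm L); auto using path_traj; lra. Qed.

Lemma segment_S4 : (x t4, y t4) = advance (x t3, y t3) (t4 - t3) (a t3).
Proof. apply (segment_advance Rm L); auto using path_traj; lra. Qed.

Lemma tangent_S2 : tangent_segment c1 s1 c3 s3 Rm (t2 - t1) (a t1).
Proof. unfold tangent_segment. rewrite point_t1, <- segment_S2, <- heading_t2. symmetry. exact point_t2. Qed.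

Lemma tangent_S4 : tangent_segment c3 s3 c5 s5 Rm (t4 - t3) (a t3).
Proof.
  unfold tangent_segment. rewrite point_t3, <- segment_S4, <- (Hseg4 t4) by lra.
  symmetry. exact point_t4.
Qed.

Lemma competitor_not_shorter (c3' : pt) (th ps2 ps4 ae A1 l2 B1 B2 l4 A5 : R) :
  0 <= A1 -> 0 <= l2 -> 0 <= B1 -> 0 <= B2 -> 0 <= l4 -> 0 <= A5 ->
  a 0 + s1 * A1 / Rm = ps2 -> ps2 + s3 * B1 / Rm = th ->
  th + s3 * B2 / Rm = ps4 -> ps4 + s5 * A5 / Rm = ae ->
  tangent_segment c1 s1 c3' s3 Rm l2 ps2 -> tangent_segment c3' s3 c5 s5 Rm l4 ps4 ->
  turn_point c3' s3 Rm th = xm -> same_heading ae (a L) ->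
  L <= A1 + (l2 + (B1 + (B2 + (l4 + A5)))).
Proof.
  intros HA1 Hl2 HB1 HB2 Hl4 HA5 E1 E3 E4 E5 T2 T4 Hm [Hc Hs].
  destruct (CSCSC_dubins_path Rm s1 s3 s5 c1 c3' c5 (a 0) ps2 th ps4 ae A1 l2 B1 B2 l4 A5)
    as [x' [y' [a' [[G [G0 [Ga0 [GL GaL]]]] [t [Ht Vt]]]]]]; auto.
  destruct Hopt as [[_ [Hi [Hai [Hf [Haf _]]]]] Hmin].
  apply (Hmin _ x' y' a').
  split; [exact G|split; [|split; [|split; [|split]]]].
  - rewrite G0. unfold c1. rewrite turn_point_center. exact Hi.
  - rewrite Ga0. exact Hai.
  - rewrite GL, <- Hf. transitivity (turn_point c5 s5 Rm (a L)).
    + unfold turn_point. rewrite Hc, Hs. reflexivity.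
    + apply turn_point_center.
  - destruct Haf as [Hfc Hfs]. rewrite GaL. split; congruence.
  - exists t. split; [exact Ht|]. rewrite Vt. exact Hm.
Qed.

Lemma no_full_loop (j : R) : (j = 0 \/ j = 1) ->
  2 * PI * Rm * j <= tm - t2 -> 2 * PI * Rm * (1 - j) <= t3 - tm -> False.
Proof.
  intros Hj H1 H2. pose proof PI_RGT_0.
  assert (Hs3j : s3 * j = -1 \/ s3 * j = 0 \/ s3 * j = 1)
    by (destruct Hs3 as [-> | ->], Hj as [-> | ->]; lra).
  assert (Hs3' : s3 = -1 \/ s3 = 0 \/ s3 = 1) by lra.
  assert (0 < 2 * PI * Rm) by (apply Rmult_lt_0_compat; lra).
  enough (L <= t1 + (t2 - t1 + (tm - t2 - 2 * PI * Rm * j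
            + (t3 - tm - 2 * PI * Rm * (1 - j) + (t4 - t3 + (L - t4)))))) by lra.
  apply (competitor_not_shorter c3 (a tm - 2 * PI * (s3 * j)) (a t1) (a t3 - 2 * PI * s3)
           (a L - 2 * PI * s3)); try lra.
  - rewrite heading_t1. reflexivity.
  - rewrite heading_tm. unfold u. field. lra.
  - rewrite heading_t3. unfold w. field. lra.
  - rewrite heading_L. field. lra.
  - exact tangent_S2.
  - apply tangent_segment_sub_2PI; [exact Hs3'|exact tangent_S4].
  - rewrite turn_point_sub_2PI by exact Hs3j. unfold c3. apply turn_point_center.
  - apply (sin_cos_sub_2PI_mult s3 (a L)) in Hs3' as [Hs Hc]. split; [exact Hc|exact Hs].
Qed.

Lemma middle_arcs_lt_2PI : u < 2 * PI /\ w < 2 * PI.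
Proof.
  unfold u, w. split; apply Rlt_div_l; try lra; apply Rnot_le_lt; intros H.
  - apply (no_full_loop 1); [right; reflexivity|lra|lra].
  - apply (no_full_loop 0); [left; reflexivity|lra|lra].
Qed.

Lemma rotated_competitor_not_shorter (d D2 D4 m2 m4 : R) :
  0 <= m2 -> 0 <= m4 -> 0 <= t1 + s1 * Rm * D2 -> 0 <= Rm * u + s3 * Rm * (d - D2) ->
  0 <= Rm * w + s3 * Rm * (D4 - d) -> 0 <= L - t4 - s5 * Rm * D4 ->
  tangent_segment c1 s1 (turn_center xm s3 Rm (a tm + d)) s3 Rm m2 (a t1 + D2) ->
  tangent_segment (turn_center xm s3 Rm (a tm + d)) s3 c5 s5 Rm m4 (a t3 + D4) ->
  t2 - t1 + (t4 - t3) <= m2 + m4 - (s3 - s1) * Rm * D2 - (s5 - s3) * Rm * D4.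
Proof.
  intros Hm2 Hm4 HA1 HB1 HB2 HA5 T2 T4.
  assert (HRu : Rm * u = tm - t2) by (unfold u; field; lra).
  assert (HRw : Rm * w = t3 - tm) by (unfold w; field; lra).
  enough (L <= t1 + s1 * Rm * D2 + (m2 + (Rm * u + s3 * Rm * (d - D2)
            + (Rm * w + s3 * Rm * (D4 - d) + (m4 + (L - t4 - s5 * Rm * D4))))))
    by (rewrite HRu, HRw in *; lra).
  apply (competitor_not_shorter (turn_center xm s3 Rm (a tm + d))
           (a tm + d) (a t1 + D2) (a t3 + D4) (a L)); auto.
  - rewrite heading_t1. destruct Hs1 as [-> | ->]; field; lra.
  - rewrite heading_tm. destruct Hs3 as [-> | ->]; field; lra.
  - rewrite heading_t3. destruct Hs3 as [-> | ->]; field; lra.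
  - rewrite heading_L. destruct Hs5 as [-> | ->]; field; lra.
  - apply turn_point_center.
  - split; reflexivity.
Qed.

Lemma middle_arcs_balanced : cos u = cos w.
Proof.
  apply (balanced_arc_angles Rm s1 s3 s5 c1 c5 xm (a t1) (a tm) (a t3) u w
           (t2 - t1) (t4 - t3) t1 (L - t4)); try assumption; try lra.
  - unfold u. apply Rdiv_le_0_compat; lra.
  - unfold w. apply Rdiv_le_0_compat; lra.
  - exact heading_tm.
  - exact heading_t3.
  - exact tangent_S2.
  - exact tangent_S4.
  - exact rotated_competitor_not_shorter.
Qed.

Lemma offset_S2 : line_offset xm (x t1, y t1) (a t1) = s3 * Rm * (1 - cos u).
Proof.
  rewrite <- (line_offset_advance xm _ (t2 - t1)), <- segment_S2, <- point_t2, heading_t2.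
  replace xm with (turn_point c3 s3 Rm (a tm)) by apply turn_point_center.
  rewrite line_offset_turn_point, heading_tm.
  replace (a t1 + s3 * u - a t1) with (s3 * u) by ring. rewrite cos_sign_mul by exact Hs3.
  reflexivity.
Qed.

Lemma offset_S4 : line_offset xm (x t3, y t3) (a t3) = s3 * Rm * (1 - cos w).
Proof.
  rewrite <- point_t3.
  replace xm with (turn_point c3 s3 Rm (a tm)) by apply turn_point_center.
  rewrite line_offset_turn_point, heading_t3.
  replace (a tm - (a tm + s3 * w)) with (- (s3 * w)) by ring.
  rewrite cos_neg, cos_sign_mul by exact Hs3. reflexivity.
Qed.

Lemma offset_nonzero : s3 * Rm * (1 - cos u) <> 0.
Proof.
  destruct middle_arcs_lt_2PI as [Hu2 Hw2]. pose proof middle_arcs_balanced as Hcos.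
  intros Z. apply Rmult_integral in Z as [Z|Z].
  - apply Rmult_integral in Z as [Z|Z]; [destruct Hs3; lra|lra].
  - assert (Hu0 : u = 0) by (apply cos_eq_1_0_2PI; [split; [unfold u; apply Rdiv_le_0_compat|]|]; lra).
    assert (Hw0 : w = 0) by (apply cos_eq_1_0_2PI; [split; [unfold w; apply Rdiv_le_0_compat|]|]; lra).
    assert (u + w = (t3 - t2) / Rm) by (unfold u, w; field; lra).
    assert (0 < (t3 - t2) / Rm) by (apply Rdiv_lt_0_compat; lra). lra.
Qed.

Lemma optimal_CSCSC_inverse_circles :
  exists (c2 c4 : pt) (rho : R),
    is_circle_off xm (inverse_set xm Rm (line_through (x t1, y t1) (x t2, y t2))) c2 rho /\
    is_circle_off xm (inverse_set xm Rm (line_through (x t3, y t3) (x t4, y t4))) c4 rho.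
Proof.
  pose proof (inverse_line_is_circle xm (x t1, y t1) (a t1) (t2 - t1) Rm) as C2.
  pose proof (inverse_line_is_circle xm (x t3, y t3) (a t3) (t4 - t3) Rm) as C4.
  rewrite offset_S2 in C2. rewrite offset_S4, <- middle_arcs_balanced in C4.
  rewrite segment_S2, segment_S4.
  do 3 eexists. split; [apply C2|apply C4]; try lra; exact offset_nonzero.
Qed.

End Optimal_CSCSC_path.

Theorem lemma2 (Rmin : R) (Xi Xf : config) (xm : pt)
    (L : R) (x y a : R -> R) (t1 t2 t3 t4 : R) :
  0 < Rmin ->
  4 * Rmin <= pdist (fst Xi) xm ->
  4 * Rmin <= pdist xm (fst Xf) ->
  4 * Rmin <= pdist (fst Xi) (fst Xf) ->
  optimal_three_point_path Rmin Xi xm Xf L x y a ->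
  CSCSC_type Rmin xm L x y a t1 t2 t3 t4 ->
  exists (c2 c4 : pt) (rho : R),
    is_circle_off xm
      (inverse_set xm Rmin (line_through (x t1, y t1) (x t2, y t2))) c2 rho /\
    is_circle_off xm
      (inverse_set xm Rmin (line_through (x t3, y t3) (x t4, y t4))) c4 rho.
Proof.
  intros HR _ _ _ Hopt
    [[Ht1 Ht12] [Ht23 [Ht34 [Ht4L [[k1 [Hk1 Harc1]] [Hseg2 [[k3 [Hk3 Harc3]]
      [Hseg4 [[k5 [Hk5 Harc5]] [tm [Htm Hxm]]]]]]]]]]].
  destruct (curvature_sign Rmin k1 HR Hk1) as [s1 [Hs1 ->]].
  destruct (curvature_sign Rmin k3 HR Hk3) as [s3 [Hs3 ->]].
  destruct (curvature_sign Rmin k5 HR Hk5) as [s5 [Hs5 ->]].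
  exact (optimal_CSCSC_inverse_circles Rmin Xi Xf xm L x y a t1 t2 t3 t4 tm s1 s3 s5
           HR Hs1 Hs3 Hs5 Hopt Ht1 Ht12 Ht23 Ht34 Ht4L Htm Hxm Harc1 Hseg2 Harc3 Hseg4 Harc5).
Qed.
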